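(* Let $\bar t>0$, $I=(0,\bar t)$, let $\gamma_1,\gamma_2\in\mathrm{Lip}(I)$ (extended continuously to $\bar I$) with $\gamma_1<0<\gamma_2$ on $I$, $\gamma_1(0)=\gamma_1(\bar t)=\gamma_2(0)=\gamma_2(\bar t)=0$, $\gamma_1$ convex and $\gamma_2$ concave, and let $D=\{(y,t)\in\mathbb W: t\in I,\ \gamma_1(t)<y<\gamma_2(t)\}$. Let $\phi:\partial D\to\mathbb R$ be continuous with $\phi_1,\phi_2\in\mathrm{Lip}(I)$, and assume $$\zeta<\frac{\sqrt{129}-11}{4}.$$ Then there exists $u:\bar D\to\mathbb R$ such that: (i) $R_\phi=S_u=\{(u(y,t),y,t+2yu(y,t)):(y,t)\in D\}$; (ii) $u$ is Lipschitz continuous on $\bar D$; (iii) $u=\phi$ on $\partial D$.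
   Context: $\mathbb H$ is $\mathbb R^3$ with product $(x,y,t)\cdot(\xi,\eta,\tau)=(x+\xi,y+\eta,t+\tau+2(y\xi-x\eta))$; $X=\partial_x+2y\partial_t$, $Y=\partial_y-2x\partial_t$, $H_p=\mathrm{span}\{X(p),Y(p)\}$. $\mathbb W=\{x=0\}$ with coordinates $(y,t)$. Set $\phi_i(s)=\phi(\gamma_i(s),s)$, $\|\gamma\|_\infty=\max_i\|\gamma_i\|_\infty$, $\mathrm{Lip}(\gamma)=\max_i\mathrm{Lip}(\gamma_i)$, $\|\phi\|_\infty=\max_i\|\phi_i\|_\infty$, $\mathrm{Lip}(\phi)=\max_i\mathrm{Lip}(\phi_i)$, $\zeta=4(\|\gamma\|_\infty+\mathrm{Lip}(\gamma))(\|\phi\|_\infty+\mathrm{Lip}(\phi))$, $p_i(s)=(\phi_i(s),\gamma_i(s),s+2\gamma_i(s)\phi_i(s))$. For $\zeta<1$, $\lambda(s)$ denotes the unique point of $\bar I$ with $p_2(\lambda(s))-p_1(s)\in H_{p_1(s)}$ (equivalently $\lambda(s)-s+2(\gamma_2(\lambda(s))-\gamma_1(s))(\phi_2(\lambda(s))+\phi_1(s))=0$); $\lambda$ is increasing and bi-Lipschitz with $\lambda(0)=0$, $\lambda(\bar t)=\bar t$. Define $\rho(h,s)=(1-h)p_1(s)+h\,p_2(\lambda(s))$ for $(h,s)\in Q=(0,1)\times I$ and $R_\phi=\rho(Q)$. *)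

From Stdlib Require Import Reals Lra.
From Coquelicot Require Import Coquelicot.
Open Scope R_scope.

(* Points of the Heisenberg group H = R^3, written (x, y, t). *)
Definition pt3 := (R * R * R)%type.

Definition vadd (p q : pt3) : pt3 :=
  let '(x, y, t) := p in let '(a, b, c) := q in (x + a, y + b, t + c).
Definition vsub (p q : pt3) : pt3 :=
  let '(x, y, t) := p in let '(a, b, c) := q in (x - a, y - b, t - c).
Definition vscale (k : R) (p : pt3) : pt3 :=
  let '(x, y, t) := p in (k * x, k * y, k * t).

(* Left-invariant vector fields X = d_x + 2y d_t, Y = d_y - 2x d_t at p. *)
Definition Xf (p : pt3) : pt3 := let '(x, y, t) := p in (1, 0, 2 * y).
Definition Yf (p : pt3) : pt3 := let '(x, y, t) := p in (0, 1, -2 * x).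
Definition in_horizontal (p v : pt3) : Prop :=
  exists a b : R, v = vadd (vscale a (Xf p)) (vscale b (Yf p)).

Definition Iopen (tb t : R) : Prop := 0 < t < tb.
Definition Iclosed (tb t : R) : Prop := 0 <= t <= tb.

Definition lip_on (P : R -> Prop) (f : R -> R) : Prop :=
  exists L : R, forall s t, P s -> P t -> Rabs (f s - f t) <= L * Rabs (s - t).
Definition cont_on (P : R -> Prop) (f : R -> R) : Prop :=
  forall t, P t -> forall eps, 0 < eps -> exists delta, 0 < delta /\
    forall s, P s -> Rabs (s - t) < delta -> Rabs (f s - f t) < eps.
Definition convex_on (P : R -> Prop) (f : R -> R) : Prop :=
  forall a b th, P a -> P b -> 0 <= th <= 1 ->
    f (th * a + (1 - th) * b) <= th * f a + (1 - th) * f b.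
Definition concave_on (P : R -> Prop) (f : R -> R) : Prop :=
  forall a b th, P a -> P b -> 0 <= th <= 1 ->
    th * f a + (1 - th) * f b <= f (th * a + (1 - th) * b).

(* The plane W = {x = 0} with coordinates (y, t); Euclidean distance. *)
Definition distW (y t y' t' : R) : R := sqrt ((y - y') ^ 2 + (t - t') ^ 2).
Definition closureW (S : R -> R -> Prop) (y t : R) : Prop :=
  forall eps, 0 < eps -> exists y' t', S y' t' /\ distW y t y' t' < eps.
Definition bdryW (S : R -> R -> Prop) (y t : R) : Prop :=
  closureW S y t /\ closureW (fun y' t' => ~ S y' t') y t.

Definition domD (tb : R) (g1 g2 : R -> R) (y t : R) : Prop :=
  Iopen tb t /\ g1 t < y < g2 t.

Definition phi_i (phi : R -> R -> R) (g : R -> R) (s : R) : R := phi (g s) s.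

Definition supI (tb : R) (f : R -> R) : R :=
  real (Lub_Rbar (fun r => exists t, Iopen tb t /\ r = Rabs (f t))).
Definition lipI (tb : R) (f : R -> R) : R :=
  real (Lub_Rbar (fun r => exists s t, Iopen tb s /\ Iopen tb t /\ s <> t /\
                     r = Rabs (f s - f t) / Rabs (s - t))).

Definition zeta (tb : R) (g1 g2 : R -> R) (phi : R -> R -> R) : R :=
  4 * (Rmax (supI tb g1) (supI tb g2) + Rmax (lipI tb g1) (lipI tb g2))
    * (Rmax (supI tb (phi_i phi g1)) (supI tb (phi_i phi g2))
       + Rmax (lipI tb (phi_i phi g1)) (lipI tb (phi_i phi g2))).

Definition p_i (phi : R -> R -> R) (g : R -> R) (s : R) : pt3 :=
  (phi_i phi g s, g s, s + 2 * g s * phi_i phi g s).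

(* R_phi = { (1-h) p1(s) + h p2(lambda(s)) : h in (0,1), s in I }, where
   lambda(s) is the (unique, when zeta < 1) point l of [0,tb] with
   p2(l) - p1(s) in H_{p1(s)}. *)
Definition R_phi (tb : R) (g1 g2 : R -> R) (phi : R -> R -> R) (p : pt3) : Prop :=
  exists h s l, 0 < h < 1 /\ Iopen tb s /\ Iclosed tb l /\
    in_horizontal (p_i phi g1 s) (vsub (p_i phi g2 l) (p_i phi g1 s)) /\
    p = vadd (vscale (1 - h) (p_i phi g1 s)) (vscale h (p_i phi g2 l)).

Definition S_u (tb : R) (g1 g2 : R -> R) (u : R -> R -> R) (p : pt3) : Prop :=
  exists y t, domD tb g1 g2 y t /\ p = (u y t, y, t + 2 * y * u y t).

(* lambda(s) is the zero of l |-> l - s + 2 (gamma2(l) - gamma1(s)) (phi2(l) + phi1(s)), a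
   perturbation of size zeta of l - s, so lambda is bi-Lipschitz from I onto I.  The horizontal
   segments from p1(s) to p2(lambda(s)) project onto W as a foliation of D: at a fixed height y,
   the t-coordinate of the segment point over y is again a small perturbation of s, hence
   strictly increasing in s, and convexity of gamma1, concavity of gamma2 make every point of D
   reached.  Letting u(y, t) be the x-coordinate of the segment point over (y, t) gives
   S_u = R_phi by construction.  u is Lipschitz since its slope along each segment is bounded,
   and across segments the change of s is controlled by the change of t. *)

From Stdlib Require Import Reals Lra Psatz ClassicalEpsilon.
From Coquelicot Require Import Coquelicot.
Open Scope R_scope.

Definition lip_with (P : R -> Prop) (L : R) (f : R -> R) : Prop :=
  forall s t, P s -> P t -> Rabs (f s - f t) <= L * Rabs (s - t).

Definition bounded_by (P : R -> Prop) (M : R) (f : R -> R) : Prop :=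
  forall s, P s -> Rabs (f s) <= M.

Lemma Rabs_sub_triang a b : Rabs (a - b) <= Rabs a + Rabs b.
Proof. split_Rabs; lra. Qed.

Lemma Rabs_triang3 a b c d : Rabs (a - d) <= Rabs (a - b) + Rabs (b - c) + Rabs (c - d).
Proof. split_Rabs; lra. Qed.

Lemma Rabs_mult_le a b A B : Rabs a <= A -> Rabs b <= B -> Rabs (a * b) <= A * B.
Proof. intros. rewrite Rabs_mult. apply Rmult_le_compat; auto using Rabs_pos. Qed.

Lemma Rabs_div_le N D K : 0 < D -> Rabs N <= K * D -> Rabs (N / D) <= K.
Proof.
  intros HD H. unfold Rdiv. rewrite Rabs_mult, Rabs_inv, (Rabs_right D) by lra.
  apply Rmult_le_reg_r with D; auto. rewrite Rmult_assoc, Rinv_l by lra. lra.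
Qed.

Lemma Rdiv_between a b : 0 <= a <= b -> 0 < b -> 0 <= a / b <= 1.
Proof.
  intros Hab Hb. split.
  - apply Rmult_le_pos; [lra | left; apply Rinv_0_lt_compat; lra].
  - apply Rmult_le_reg_r with b; auto. unfold Rdiv. rewrite Rmult_assoc, Rinv_l by lra. lra.
Qed.

Lemma exists_pos_below a b : 0 < a -> 0 < b -> exists e, 0 < e /\ e <= a /\ e <= b.
Proof.
  intros. exists (Rmin a b). split; [apply Rmin_pos | split; [apply Rmin_l | apply Rmin_r]]; auto.
Qed.

Definition clamp (a b x : R) : R := Rmax a (Rmin b x).

Lemma clamp_between a b x : a <= b -> a <= clamp a b x <= b.
Proof. intros. unfold clamp, Rmax, Rmin. repeat destruct Rle_dec; lra. Qed.

Lemma clamp_id a b x : a <= x <= b -> clamp a b x = x.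
Proof. intros. unfold clamp, Rmax, Rmin. repeat destruct Rle_dec; lra. Qed.

Lemma clamp_lip a b x y : a <= b -> Rabs (clamp a b x - clamp a b y) <= Rabs (x - y).
Proof. intros. unfold clamp, Rmax, Rmin. repeat destruct Rle_dec; split_Rabs; lra. Qed.

Lemma lip_continuity (f : R -> R) K :
  0 <= K -> (forall x y, Rabs (f x - f y) <= K * Rabs (x - y)) -> continuity f.
Proof.
  intros HK Hf x eps Heps. exists (eps / (K + 1)). split.
  { apply Rdiv_lt_0_compat; lra. }
  intros y [_ Hy]. simpl in *. unfold R_dist in *.
  apply Rle_lt_trans with (K * (eps / (K + 1))).
  - eapply Rle_trans; [apply Hf | apply Rmult_le_compat_l; lra].
  - apply Rlt_le_trans with ((K + 1) * (eps / (K + 1))).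
    + apply Rmult_lt_compat_r; [apply Rdiv_lt_0_compat|]; lra.
    + right. field. lra.
Qed.

Lemma lip_ivt (f : R -> R) a b K c :
  a <= b -> 0 <= K -> lip_with (fun x => a <= x <= b) K f -> f a <= c <= f b ->
  exists x, a <= x <= b /\ f x = c.
Proof.
  intros Hab HK Hf Hc.
  assert (Hcont : continuity (fun x => f (clamp a b x))).
  { apply lip_continuity with K; auto. intros x y.
    eapply Rle_trans; [apply Hf; apply clamp_between; lra|].
    apply Rmult_le_compat_l; auto. apply clamp_lip; lra. }
  destruct (IVT_gen _ a b c Hcont) as [x [Hx Hfx]].
  - rewrite !clamp_id by lra. split; [apply Rle_trans with (f a) | apply Rle_trans with (f b)];
      try apply Rmin_l; try apply Rmax_r; lra.
  - rewrite Rmin_left, Rmax_right in Hx by lra.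
    exists x. rewrite clamp_id in Hfx by lra. auto.
Qed.

(** * The t-coordinate along a horizontal segment *)

Definition harm (a b : R) : R := a * b / (a + b).

(* On the segment from (P, A, s + 2AP) to (Q, B, l + 2BQ), with
   l = s - 2 (B - A)(P + Q), the point with y-coordinate y = A + a = B - b
   lies above the point (y, s - 2 tshift a b P Q) of W. *)
Definition tshift (a b P Q : R) : R := a * (P + Q) + (P - Q) * harm a b.

Lemma harm_bounds a b : 0 <= a -> 0 <= b -> 0 < a + b ->
  0 <= harm a b <= a /\ harm a b <= b.
Proof.
  intros Ha Hb Hab. unfold harm.
  assert (h1 := Rdiv_between b (a + b) ltac:(lra) Hab).
  assert (h2 := Rdiv_between a (a + b) ltac:(lra) Hab).
  replace (a * b / (a + b)) with (a * (b / (a + b))) by (field; lra).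
  split; [split|]; [nra | nra |].
  replace (a * (b / (a + b))) with (b * (a / (a + b))) by (field; lra). nra.
Qed.

Lemma harm_diff a b a' b' : 0 <= a -> 0 <= b -> 0 <= a' -> 0 <= b' ->
  0 < a + b -> 0 < a' + b' ->
  Rabs (harm a' b' - harm a b) <= Rabs (a' - a) + Rabs (b' - b).
Proof.
  intros. unfold harm.
  replace (a' * b' / (a' + b') - a * b / (a + b)) with
    ((a * a' * (b' - b) + b * b' * (a' - a)) / ((a + b) * (a' + b'))) by (field; lra).
  apply Rabs_div_le; [nra|].
  eapply Rle_trans; [apply Rabs_triang|].
  rewrite !Rabs_mult, (Rabs_right a), (Rabs_right a'), (Rabs_right b), (Rabs_right b') by lra.
  generalize (Rabs_pos (b' - b)) (Rabs_pos (a' - a)). intros.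
  assert (a * a' <= (a + b) * (a' + b')) by nra.
  assert (b * b' <= (a + b) * (a' + b')) by nra.
  nra.
Qed.

Lemma tshift_diff a b a' b' P Q P' Q' M G :
  0 <= a -> 0 <= b -> 0 <= a' -> 0 <= b' -> 0 < a + b -> 0 < a' + b' ->
  Rabs P' <= M -> Rabs Q' <= M -> a + b <= 2 * G ->
  Rabs (tshift a' b' P' Q' - tshift a b P Q)
  <= 2 * M * (Rabs (a' - a) + Rabs (b' - b)) + 2 * G * (Rabs (P' - P) + Rabs (Q' - Q)).
Proof.
  intros Ha Hb Ha' Hb' Hab Hab' HP HQ HG. unfold tshift.
  destruct (harm_bounds a b Ha Hb Hab) as [[h0 h1] h2].
  generalize (harm_diff a b a' b' Ha Hb Ha' Hb' Hab Hab'). intros hd.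
  set (H := harm a b) in *. clearbody H. set (H' := harm a' b') in *.
  replace (a' * (P' + Q') + (P' - Q') * H' - (a * (P + Q) + (P - Q) * H)) with
    (((a' - a) * (P' + Q') + (P' - Q') * (H' - H))
     + ((a + H) * (P' - P) + (a - H) * (Q' - Q))) by ring.
  eapply Rle_trans; [apply Rabs_triang | apply Rplus_le_compat].
  - eapply Rle_trans; [apply Rabs_triang|]. rewrite !Rabs_mult.
    assert (Rabs (P' + Q') + Rabs (P' - Q') <= 2 * M) by (revert HP HQ; split_Rabs; lra).
    generalize (Rabs_pos (a' - a)) (Rabs_pos (b' - b)) (Rabs_pos (P' + Q'))
      (Rabs_pos (P' - Q')) (Rabs_pos (H' - H)).
    intros. nra.
  - eapply Rle_trans; [apply Rabs_triang|].
    rewrite !Rabs_mult, (Rabs_right (a + H)), (Rabs_right (a - H)) by lra.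
    generalize (Rabs_pos (P' - P)) (Rabs_pos (Q' - Q)). intros. nra.
Qed.

Lemma tshift_bounds a b P Q M : 0 <= a -> 0 <= b -> 0 < a + b ->
  Rabs P <= M -> Rabs Q <= M ->
  Rabs (tshift a b P Q) <= 4 * M * a /\
  Rabs (tshift a b P Q - (a + b) * (P + Q)) <= 4 * M * b.
Proof.
  intros Ha Hb Hab HP HQ. unfold tshift.
  destruct (harm_bounds a b Ha Hb Hab) as [[h0 h1] h2].
  set (H := harm a b) in *. clearbody H.
  assert (hS : Rabs (P + Q) <= 2 * M) by (revert HP HQ; split_Rabs; lra).
  assert (hD : Rabs (P - Q) <= 2 * M) by (revert HP HQ; split_Rabs; lra).
  generalize (Rmult_le_compat_l H _ _ h0 hD) (Rabs_pos P). intros.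
  split.
  - eapply Rle_trans; [apply Rabs_triang|].
    rewrite !Rabs_mult, (Rabs_right a), (Rabs_right H) by lra.
    generalize (Rmult_le_compat_l a _ _ Ha hS). intros. nra.
  - replace (a * (P + Q) + (P - Q) * H - (a + b) * (P + Q)) with ((P - Q) * H - b * (P + Q))
      by ring.
    eapply Rle_trans; [apply Rabs_sub_triang|].
    rewrite !Rabs_mult, (Rabs_right b), (Rabs_right H) by lra.
    generalize (Rmult_le_compat_l b _ _ Hb hS). intros. nra.
Qed.

Lemma segment_coords A B P Q s l h y : B - A <> 0 ->
  l = s - 2 * (B - A) * (P + Q) -> y = (1 - h) * A + h * B ->
  P + (y - A) * (Q - P) / (B - A) = (1 - h) * P + h * Q /\
  (s - 2 * tshift (y - A) (B - y) P Q) + 2 * y * (P + (y - A) * (Q - P) / (B - A))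
  = (1 - h) * (s + 2 * A * P) + h * (l + 2 * B * Q).
Proof.
  intros Hd Hl Hy. subst y l. unfold tshift, harm. split.
  - field; auto.
  - replace ((1 - h) * A + h * B - A + (B - ((1 - h) * A + h * B))) with (B - A) by ring.
    field; auto.
Qed.

Lemma interp_diff P P' D D' a a' d d' K :
  0 < d -> 0 < d' -> 0 <= a <= d -> 0 <= a' <= d' -> Rabs D' <= K * d' ->
  Rabs ((P' - a' * D' / d') - (P - a * D / d))
  <= Rabs (P' - P) + Rabs (D' - D) + K * (Rabs (a' - a) + Rabs ((d' - a') - (d - a))).
Proof.
  intros Hd Hd' Ha Ha' HD.
  replace ((P' - a' * D' / d') - (P - a * D / d)) with
    ((P' - P) - ((D' - D) * (a / d)) - ((D' / d') * ((a' * (d - a) - a * (d' - a')) / d)))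
    by (field; lra).
  assert (h1 : Rabs (a / d) <= 1) by (apply Rabs_div_le; auto; rewrite Rabs_right; lra).
  assert (h2 : Rabs (D' / d') <= K) by (apply Rabs_div_le; auto).
  assert (h3 : Rabs ((a' * (d - a) - a * (d' - a')) / d)
               <= Rabs (a' - a) + Rabs ((d' - a') - (d - a))).
  { apply Rabs_div_le; auto.
    replace (a' * (d - a) - a * (d' - a')) with ((a' - a) * (d - a) - a * ((d' - a') - (d - a)))
      by ring.
    eapply Rle_trans; [apply Rabs_sub_triang|].
    rewrite !Rabs_mult, (Rabs_right (d - a)), (Rabs_right a) by lra.
    generalize (Rabs_pos (a' - a)) (Rabs_pos (d' - a' - (d - a))). intros. nra. }
  eapply Rle_trans; [apply Rabs_sub_triang|].
  eapply Rle_trans; [apply Rplus_le_compat_r, Rabs_sub_triang|].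
  generalize (Rabs_mult_le _ _ _ _ (Rle_refl (Rabs (D' - D))) h1) (Rabs_mult_le _ _ _ _ h2 h3).
  lra.
Qed.

Lemma lub_bounds (E : R -> Prop) c x0 : E x0 -> (forall x, E x -> x <= c) ->
  (forall x, E x -> x <= real (Lub_Rbar E)) /\ real (Lub_Rbar E) <= c.
Proof.
  intros H0 Hc. generalize (Lub_Rbar_correct E).
  destruct (Lub_Rbar E) as [r| |]; intros [ub lub].
  - split; [intros x Hx; apply (ub x Hx)|]. apply (lub (Finite c)). intros x Hx. apply Hc; auto.
  - exfalso. apply (lub (Finite c)). intros x Hx. apply Hc; auto.
  - exfalso. apply (ub x0 H0).
Qed.

Lemma lipI_spec tb f : 0 < tb -> lip_on (Iopen tb) f ->
  0 <= lipI tb f /\ lip_with (Iopen tb) (lipI tb f) f.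
Proof.
  intros Htb [L HL]. unfold lipI.
  set (E := fun r => exists s t, Iopen tb s /\ Iopen tb t /\ s <> t /\
                      r = Rabs (f s - f t) / Rabs (s - t)).
  assert (Ex : E (Rabs (f (tb / 3) - f (2 * tb / 3)) / Rabs (tb / 3 - 2 * tb / 3))).
  { exists (tb / 3), (2 * tb / 3). unfold Iopen. repeat split; lra. }
  assert (Hc : forall x, E x -> x <= Rabs L).
  { intros x [s [t [Hs [Ht [Hst ->]]]]]. apply Rmult_le_reg_r with (Rabs (s - t)).
    - apply Rabs_pos_lt; lra.
    - unfold Rdiv. rewrite Rmult_assoc, Rinv_l, Rmult_1_r by (apply Rabs_no_R0; lra).
      eapply Rle_trans; [apply HL; auto|].
      apply Rmult_le_compat_r; [apply Rabs_pos | apply RRle_abs]. }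
  destruct (lub_bounds E (Rabs L) _ Ex Hc) as [H1 H2].
  split.
  - eapply Rle_trans; [|apply (H1 _ Ex)]. apply Rmult_le_pos; [apply Rabs_pos|].
    left; apply Rinv_0_lt_compat, Rabs_pos_lt; lra.
  - intros s t Hs Ht. destruct (Req_dec s t) as [-> | E'].
    + rewrite !Rminus_diag, Rabs_R0. lra.
    + assert (hq := H1 _ (ex_intro _ s (ex_intro _ t (conj Hs (conj Ht (conj E' eq_refl)))))).
      assert (0 < Rabs (s - t)) by (apply Rabs_pos_lt; lra).
      replace (Rabs (f s - f t)) with (Rabs (f s - f t) / Rabs (s - t) * Rabs (s - t))
        by (field; lra).
      apply Rmult_le_compat_r; lra.
Qed.

Lemma supI_spec tb f : 0 < tb -> lip_on (Iopen tb) f ->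
  0 <= supI tb f /\ bounded_by (Iopen tb) (supI tb f) f.
Proof.
  intros Htb [L HL]. unfold supI.
  set (E := fun r => exists t, Iopen tb t /\ r = Rabs (f t)).
  assert (Hm : Iopen tb (tb / 2)) by (unfold Iopen; lra).
  assert (Ex : E (Rabs (f (tb / 2)))) by (exists (tb / 2); auto).
  assert (Hc : forall x, E x -> x <= Rabs (f (tb / 2)) + Rabs L * tb).
  { intros x [t [Ht ->]]. generalize (HL t (tb / 2) Ht Hm). unfold Iopen in Ht.
    assert (Rabs (t - tb / 2) <= tb) by (split_Rabs; lra).
    assert (L * Rabs (t - tb / 2) <= Rabs L * tb).
    { apply Rle_trans with (Rabs L * Rabs (t - tb / 2)).
      - apply Rmult_le_compat_r; [apply Rabs_pos | apply RRle_abs].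
      - apply Rmult_le_compat_l; auto. apply Rabs_pos. }
    generalize (Rabs_triang_inv (f t) (f (tb / 2))). lra. }
  destruct (lub_bounds E _ _ Ex Hc) as [H1 H2].
  split.
  - eapply Rle_trans; [|apply (H1 _ Ex)]. apply Rabs_pos.
  - intros t Ht. apply H1. exists t. auto.
Qed.

Lemma Iclosed_approx tb f s : 0 < tb -> cont_on (Iclosed tb) f -> Iclosed tb s ->
  forall eps, 0 < eps -> exists s', Iopen tb s' /\ Rabs (s' - s) < eps /\ Rabs (f s' - f s) < eps.
Proof.
  intros Htb Hc Hs eps He. destruct (Hc s Hs eps He) as [d [Hd Hd']].
  destruct (exists_pos_below (Rmin d eps / 2) (tb / 4)) as [m [m0 [m1 m2]]];
    [generalize (Rmin_pos d eps Hd He); lra | lra |].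
  generalize (Rmin_l d eps) (Rmin_r d eps). intros.
  assert (Hm : Rabs (clamp m (tb - m) s - s) <= m).
  { unfold Iclosed in Hs. unfold clamp, Rmax, Rmin. repeat destruct Rle_dec; split_Rabs; lra. }
  generalize (clamp_between m (tb - m) s ltac:(lra)). intros Hb.
  exists (clamp m (tb - m) s). split; [unfold Iopen; lra | split; [lra|]].
  apply Hd'; [unfold Iclosed; lra | lra].
Qed.

Lemma lip_with_closure tb f L : 0 < tb -> 0 <= L -> cont_on (Iclosed tb) f ->
  lip_with (Iopen tb) L f -> lip_with (Iclosed tb) L f.
Proof.
  intros Htb HL Hc Hl s t Hs Ht. apply Rle_plus_epsilon. intros eps He.
  set (e := eps / (2 + 2 * L)).
  assert (e0 : 0 < e) by (apply Rdiv_lt_0_compat; lra).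
  destruct (Iclosed_approx tb f s Htb Hc Hs e e0) as [s' [Os [k1 k2]]].
  destruct (Iclosed_approx tb f t Htb Hc Ht e e0) as [t' [Ot [k3 k4]]].
  generalize (Hl s' t' Os Ot). intros k5.
  assert (Rabs (s' - t') <= Rabs (s - t) + 2 * e) by (revert k1 k3; split_Rabs; lra).
  assert (L * Rabs (s' - t') <= L * (Rabs (s - t) + 2 * e)) by (apply Rmult_le_compat_l; auto).
  generalize (Rabs_triang3 (f s) (f s') (f t') (f t)). rewrite (Rabs_minus_sym (f s) (f s')).
  intros.
  assert (eps = (2 + 2 * L) * e) by (unfold e; field; lra).
  lra.
Qed.

Lemma bounded_by_closure tb f M : 0 < tb -> cont_on (Iclosed tb) f ->
  bounded_by (Iopen tb) M f -> bounded_by (Iclosed tb) M f.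
Proof.
  intros Htb Hc Hb t Ht. apply Rle_plus_epsilon. intros e He.
  destruct (Iclosed_approx tb f t Htb Hc Ht e He) as [t' [Ot [_ k]]].
  generalize (Hb t' Ot). split_Rabs; lra.
Qed.

Lemma bounded_by_le P M M' f : M <= M' -> bounded_by P M f -> bounded_by P M' f.
Proof. intros HM Hb s Hs. specialize (Hb s Hs). lra. Qed.

Lemma lip_with_le P L L' f : L <= L' -> lip_with P L f -> lip_with P L' f.
Proof.
  intros HL Hl s t Hs Ht. eapply Rle_trans; [apply Hl; auto|].
  apply Rmult_le_compat_r; auto using Rabs_pos.
Qed.

Lemma closed_constants tb f1 f2 : 0 < tb ->
  lip_on (Iopen tb) f1 -> lip_on (Iopen tb) f2 ->
  cont_on (Iclosed tb) f1 -> cont_on (Iclosed tb) f2 ->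
  let S := Rmax (supI tb f1) (supI tb f2) in let L := Rmax (lipI tb f1) (lipI tb f2) in
  0 <= S /\ 0 <= L /\ bounded_by (Iclosed tb) S f1 /\ bounded_by (Iclosed tb) S f2 /\
  lip_with (Iclosed tb) L f1 /\ lip_with (Iclosed tb) L f2.
Proof.
  intros Htb Hl1 Hl2 Hc1 Hc2 S L.
  destruct (supI_spec tb f1 Htb Hl1) as [S1 Hb1]. destruct (supI_spec tb f2 Htb Hl2) as [S2 Hb2].
  destruct (lipI_spec tb f1 Htb Hl1) as [L1 Hk1]. destruct (lipI_spec tb f2 Htb Hl2) as [L2 Hk2].
  generalize (Rmax_l (supI tb f1) (supI tb f2)) (Rmax_r (supI tb f1) (supI tb f2))
    (Rmax_l (lipI tb f1) (lipI tb f2)) (Rmax_r (lipI tb f1) (lipI tb f2)).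
  fold S L. intros.
  refine (conj _ (conj _ (conj _ (conj _ (conj _ _))))); try lra.
  - apply bounded_by_closure, (bounded_by_le _ (supI tb f1)); auto.
  - apply bounded_by_closure, (bounded_by_le _ (supI tb f2)); auto.
  - apply lip_with_closure, (lip_with_le _ (lipI tb f1)); auto; lra.
  - apply lip_with_closure, (lip_with_le _ (lipI tb f2)); auto; lra.
Qed.

Lemma zeta_small G Lg M Lp : 0 <= G -> 0 <= Lg -> 0 <= M -> 0 <= Lp ->
  4 * (G + Lg) * (M + Lp) < (sqrt 129 - 11) / 4 -> 40 * (M * Lg + G * Lp) <= 1.
Proof.
  intros. assert (sqrt 129 <= 114 / 10).
  { rewrite <- (sqrt_pow2 (114 / 10)) by lra. apply sqrt_le_1_alt. lra. }
  assert (0 <= G * M) by (apply Rmult_le_pos; auto).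
  assert (0 <= Lg * Lp) by (apply Rmult_le_pos; auto).
  nra.
Qed.

(** * The domain D and its boundary *)

Lemma distW_ge y t y' t' : Rabs (y - y') <= distW y t y' t' /\ Rabs (t - t') <= distW y t y' t'.
Proof.
  unfold distW. replace ((y - y') ^ 2) with ((y - y') * (y - y')) by ring.
  replace ((t - t') ^ 2) with ((t - t') * (t - t')) by ring.
  generalize (Rle_0_sqr (y - y')) (Rle_0_sqr (t - t')). unfold Rsqr. intros.
  split; rewrite <- sqrt_Rsqr_abs; apply sqrt_le_1_alt; unfold Rsqr; lra.
Qed.

Lemma distW_le y t y' t' : distW y t y' t' <= Rabs (y - y') + Rabs (t - t').
Proof.
  unfold distW. rewrite <- (sqrt_Rsqr (Rabs (y - y') + Rabs (t - t')))
    by (generalize (Rabs_pos (y - y')) (Rabs_pos (t - t')); lra).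
  apply sqrt_le_1_alt. unfold Rsqr. rewrite <- (pow2_abs (y - y')), <- (pow2_abs (t - t')).
  generalize (Rabs_pos (y - y')) (Rabs_pos (t - t')). intros. nra.
Qed.

Lemma distW_same_t y y' t : distW y t y' t = Rabs (y - y').
Proof.
  unfold distW. replace ((t - t) ^ 2) with 0 by ring. rewrite Rplus_0_r.
  replace ((y - y') ^ 2) with (Rsqr (y - y')) by (unfold Rsqr; ring). apply sqrt_Rsqr_abs.
Qed.

Section Domain.
Variables (tb : R) (g1 g2 : R -> R).
Hypothesis Htb : 0 < tb.
Hypothesis Hsign : forall t, Iopen tb t -> g1 t < 0 < g2 t.
Hypotheses (Hg10 : g1 0 = 0) (Hg1tb : g1 tb = 0) (Hg20 : g2 0 = 0) (Hg2tb : g2 tb = 0).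
Hypotheses (Hc1 : cont_on (Iclosed tb) g1) (Hc2 : cont_on (Iclosed tb) g2).
Local Notation D := (domD tb g1 g2).

Lemma closure_corner s : s = 0 \/ s = tb -> closureW D 0 s.
Proof.
  intros Hs eps He. destruct (exists_pos_below (eps / 2) (tb / 2)) as [e [e0 [e1 e2]]]; try lra.
  assert (Hdist : forall s', Rabs (s - s') <= e -> distW 0 s 0 s' < eps).
  { intros s' Hs'. eapply Rle_lt_trans; [apply distW_le|]. rewrite Rminus_0_r, Rabs_R0. lra. }
  destruct Hs as [-> | ->]; [exists 0, e | exists 0, (tb - e)]; split;
    try (apply Hdist; split_Rabs; lra);
    (split; [unfold Iopen; lra | apply Hsign; unfold Iopen; lra]).
Qed.

Lemma closure_of_closed_region y s : Iclosed tb s -> g1 s <= y <= g2 s -> closureW D y s.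
Proof.
  intros Hs Hy.
  destruct (Req_dec s 0) as [-> | E0]; [rewrite Hg10, Hg20 in Hy; replace y with 0 by lra;
    apply closure_corner; auto|].
  destruct (Req_dec s tb) as [-> | Etb]; [rewrite Hg1tb, Hg2tb in Hy; replace y with 0 by lra;
    apply closure_corner; auto|].
  assert (Os : Iopen tb s) by (unfold Iopen, Iclosed in *; lra).
  destruct (Hsign s Os) as [h1 h2].
  intros eps He. destruct (exists_pos_below (eps / 2) ((g2 s - g1 s) / 4)) as [e [e0 [e1 e2]]];
    try lra.
  exists (clamp (g1 s + e) (g2 s - e) y), s. split.
  - split; auto. generalize (clamp_between (g1 s + e) (g2 s - e) y ltac:(lra)). lra.
  - rewrite distW_same_t. unfold clamp, Rmax, Rmin. repeat destruct Rle_dec; split_Rabs; lra.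
Qed.

Lemma bdry_graph_g1 s : Iclosed tb s -> bdryW D (g1 s) s.
Proof.
  intros Hs. split.
  - apply closure_of_closed_region; auto. destruct (Req_dec s 0) as [-> | ?];
      [rewrite Hg10, Hg20; lra|].
    destruct (Req_dec s tb) as [-> | ?]; [rewrite Hg1tb, Hg2tb; lra|].
    generalize (Hsign s ltac:(unfold Iopen, Iclosed in *; lra)). lra.
  - intros eps He. exists (g1 s - eps / 2), s. split.
    + intros [_ [h _]]. lra.
    + rewrite distW_same_t. split_Rabs; lra.
Qed.

Lemma bdry_graph_g2 s : Iclosed tb s -> bdryW D (g2 s) s.
Proof.
  intros Hs. split.
  - apply closure_of_closed_region; auto. destruct (Req_dec s 0) as [-> | ?];
      [rewrite Hg10, Hg20; lra|].
    destruct (Req_dec s tb) as [-> | ?]; [rewrite Hg1tb, Hg2tb; lra|].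
    generalize (Hsign s ltac:(unfold Iopen, Iclosed in *; lra)). lra.
  - intros eps He. exists (g2 s + eps / 2), s. split.
    + intros [_ [_ h]]. lra.
    + rewrite distW_same_t. split_Rabs; lra.
Qed.

Lemma closure_domD_inv y t : closureW D y t -> Iclosed tb t /\ g1 t <= y <= g2 t.
Proof.
  intros Hc.
  assert (Ht : Iclosed tb t).
  { split; apply Rnot_lt_le; intros h.
    - destruct (Hc (- t) ltac:(lra)) as [y' [t' [[Ht' _] Hd]]].
      generalize (distW_ge y t y' t'). unfold Iopen in Ht'. split_Rabs; lra.
    - destruct (Hc (t - tb) ltac:(lra)) as [y' [t' [[Ht' _] Hd]]].
      generalize (distW_ge y t y' t'). unfold Iopen in Ht'. split_Rabs; lra. }
  split; auto. split; apply Rnot_lt_le; intros h.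
  - destruct (Hc1 t Ht ((g1 t - y) / 2) ltac:(lra)) as [d [Hd Hd']].
    destruct (exists_pos_below d ((g1 t - y) / 2)) as [e [e0 [e1 e2]]]; try lra.
    destruct (Hc e e0) as [y' [t' [[Ht' [Hy1 _]] Hdist]]].
    generalize (distW_ge y t y' t'). intros [k1 k2].
    assert (Iclosed tb t') by (unfold Iopen, Iclosed in *; lra).
    generalize (Hd' t' H ltac:(rewrite Rabs_minus_sym; lra)). split_Rabs; lra.
  - destruct (Hc2 t Ht ((y - g2 t) / 2) ltac:(lra)) as [d [Hd Hd']].
    destruct (exists_pos_below d ((y - g2 t) / 2)) as [e [e0 [e1 e2]]]; try lra.
    destruct (Hc e e0) as [y' [t' [[Ht' [_ Hy2]] Hdist]]].
    generalize (distW_ge y t y' t'). intros [k1 k2].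
    assert (Iclosed tb t') by (unfold Iopen, Iclosed in *; lra).
    generalize (Hd' t' H ltac:(rewrite Rabs_minus_sym; lra)). split_Rabs; lra.
Qed.

Lemma domD_interior y t : D y t -> ~ closureW (fun y' t' => ~ D y' t') y t.
Proof.
  intros [Ht [Hy1 Hy2]] Hc. unfold Iopen in Ht.
  destruct (exists_pos_below ((y - g1 t) / 2) ((g2 t - y) / 2)) as [e0 [e0p [e1 e2]]]; try lra.
  assert (Ct : Iclosed tb t) by (unfold Iclosed; lra).
  destruct (Hc1 t Ct e0 e0p) as [d1 [Hd1 Hd1']].
  destruct (Hc2 t Ct e0 e0p) as [d2 [Hd2 Hd2']].
  destruct (exists_pos_below d1 d2) as [d [dp [d1' d2']]]; auto.
  destruct (exists_pos_below t (tb - t)) as [r [rp [r1 r2]]]; try lra.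
  destruct (exists_pos_below d (Rmin e0 r)) as [eta [etap [k1 k2]]];
    [auto | apply Rmin_pos; auto|].
  generalize (Rmin_l e0 r) (Rmin_r e0 r). intros m1 m2.
  destruct (Hc eta etap) as [y' [t' [HnD Hd]]].
  generalize (distW_ge y t y' t'). intros [k3 k4].
  apply HnD. assert (Ot' : Iopen tb t') by (unfold Iopen; split_Rabs; lra).
  assert (Ct' : Iclosed tb t') by (unfold Iopen, Iclosed in *; lra).
  generalize (Hd1' t' Ct' ltac:(rewrite Rabs_minus_sym; lra))
    (Hd2' t' Ct' ltac:(rewrite Rabs_minus_sym; lra)). intros.
  split; auto. split; split_Rabs; lra.
Qed.

Lemma bdry_domD_cases y t : bdryW D y t ->
  (y = 0 /\ t = 0) \/ (y = 0 /\ t = tb) \/ (Iopen tb t /\ (y = g1 t \/ y = g2 t)).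
Proof.
  intros [Hc Hn]. destruct (closure_domD_inv y t Hc) as [Ht [Hy1 Hy2]].
  destruct (Req_dec t 0) as [-> | E]; [rewrite Hg10, Hg20 in *; left; split; lra|].
  destruct (Req_dec t tb) as [-> | E']; [rewrite Hg1tb, Hg2tb in *; right; left; split; lra|].
  right; right. assert (Ot : Iopen tb t) by (unfold Iopen, Iclosed in *; lra). split; auto.
  destruct (Req_dec y (g1 t)); auto. destruct (Req_dec y (g2 t)); auto.
  exfalso. apply (domD_interior y t); auto. split; auto. lra.
Qed.

Lemma cont_on_phi_i (phi : R -> R -> R) (g : R -> R) :
  (forall s, Iclosed tb s -> bdryW D (g s) s) -> cont_on (Iclosed tb) g ->
  (forall y t, bdryW D y t ->
     forall eps, 0 < eps -> exists delta, 0 < delta /\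
       forall y' t', bdryW D y' t' -> distW y t y' t' < delta ->
         Rabs (phi y' t' - phi y t) < eps) ->
  cont_on (Iclosed tb) (phi_i phi g).
Proof.
  intros Hbd Hc Hphi e He eps Heps.
  destruct (Hphi (g e) e (Hbd e He) eps Heps) as [dp [Hdp Hdp']].
  destruct (Hc e He (dp / 2) ltac:(lra)) as [d1 [Hd1 Hd1']].
  destruct (exists_pos_below d1 (dp / 2)) as [d [dpos [m1 m2]]]; try lra.
  exists d. split; auto. intros s Hs Hse.
  apply Hdp'; auto.
  eapply Rle_lt_trans; [apply distW_le|].
  generalize (Hd1' s Hs ltac:(lra)). rewrite (Rabs_minus_sym (g e)), (Rabs_minus_sym e). lra.
Qed.

(** * The map lambda *)

Section Construction.
Variables (p1 p2 : R -> R) (phi : R -> R -> R) (G Lg M Lp : R).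
Hypotheses (HG : 0 <= G) (HLg : 0 <= Lg) (HM : 0 <= M) (HLp : 0 <= Lp).
Hypothesis Hsmall : 40 * (M * Lg + G * Lp) <= 1.
Hypotheses (Hg1b : bounded_by (Iclosed tb) G g1) (Hg2b : bounded_by (Iclosed tb) G g2).
Hypotheses (Hp1b : bounded_by (Iclosed tb) M p1) (Hp2b : bounded_by (Iclosed tb) M p2).
Hypotheses (Hg1l : lip_with (Iclosed tb) Lg g1) (Hg2l : lip_with (Iclosed tb) Lg g2).
Hypotheses (Hp1l : lip_with (Iclosed tb) Lp p1) (Hp2l : lip_with (Iclosed tb) Lp p2).
Hypotheses (Hphi1 : forall s, phi (g1 s) s = p1 s) (Hphi2 : forall s, phi (g2 s) s = p2 s).
Hypotheses (Hconv : convex_on (Iopen tb) g1) (Hconc : concave_on (Iopen tb) g2).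

Lemma Iclosed_0 : Iclosed tb 0. Proof. unfold Iclosed; lra. Qed.
Lemma Iclosed_tb : Iclosed tb tb. Proof. unfold Iclosed; lra. Qed.
Lemma Iopen_closed s : Iopen tb s -> Iclosed tb s. Proof. unfold Iopen, Iclosed; lra. Qed.
Local Hint Resolve Iclosed_0 Iclosed_tb Iopen_closed : core.

Lemma M_Lg_small : 8 * M * Lg <= 1 / 5.
Proof. assert (0 <= G * Lp) by (apply Rmult_le_pos; auto). lra. Qed.

Lemma p1_p2_0 : p1 0 = p2 0.
Proof. rewrite <- Hphi1, <- Hphi2, Hg10, Hg20. reflexivity. Qed.

Lemma p1_p2_tb : p1 tb = p2 tb.
Proof. rewrite <- Hphi1, <- Hphi2, Hg1tb, Hg2tb. reflexivity. Qed.

(* The t-component of v = p2(l) - p1(s) minus that of the horizontal vector at p1(s) with the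
   same x- and y-components as v. *)
Definition horiz_gap (s l : R) : R := l - s + 2 * (g2 l - g1 s) * (p2 l + p1 s).

Lemma horiz_gap_perturb s s' l l' :
  Iclosed tb s -> Iclosed tb s' -> Iclosed tb l -> Iclosed tb l' ->
  Rabs ((horiz_gap s' l' - (l' - s')) - (horiz_gap s l - (l - s)))
  <= 1 / 10 * (Rabs (s' - s) + Rabs (l' - l)).
Proof.
  intros Hs Hs' Hl Hl'. unfold horiz_gap.
  set (X := g2 l - g1 s). set (X' := g2 l' - g1 s').
  set (Y := p2 l + p1 s). set (Y' := p2 l' + p1 s').
  replace (l' - s' + 2 * X' * Y' - (l' - s') - (l - s + 2 * X * Y - (l - s)))
    with (2 * ((X' - X) * Y' + X * (Y' - Y))) by ring.
  set (S := Rabs (s' - s) + Rabs (l' - l)).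
  assert (HS : 0 <= S) by (unfold S; generalize (Rabs_pos (s' - s)) (Rabs_pos (l' - l)); lra).
  assert (h1 : Rabs (X' - X) <= Lg * S).
  { unfold X, X'. replace (g2 l' - g1 s' - (g2 l - g1 s)) with ((g2 l' - g2 l) - (g1 s' - g1 s))
      by ring.
    eapply Rle_trans; [apply Rabs_sub_triang|].
    generalize (Hg2l l' l Hl' Hl) (Hg1l s' s Hs' Hs). unfold S. lra. }
  assert (h2 : Rabs (Y' - Y) <= Lp * S).
  { unfold Y, Y'. replace (p2 l' + p1 s' - (p2 l + p1 s)) with ((p2 l' - p2 l) + (p1 s' - p1 s))
      by ring.
    eapply Rle_trans; [apply Rabs_triang|].
    generalize (Hp2l l' l Hl' Hl) (Hp1l s' s Hs' Hs). unfold S. lra. }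
  assert (h3 : Rabs Y' <= 2 * M).
  { unfold Y'. eapply Rle_trans; [apply Rabs_triang|].
    generalize (Hp2b l' Hl') (Hp1b s' Hs'). lra. }
  assert (h4 : Rabs X <= 2 * G).
  { unfold X. eapply Rle_trans; [apply Rabs_sub_triang|]. generalize (Hg2b l Hl) (Hg1b s Hs). lra. }
  assert (Rabs ((X' - X) * Y' + X * (Y' - Y)) <= Lg * S * (2 * M) + 2 * G * (Lp * S)).
  { eapply Rle_trans; [apply Rabs_triang|]. apply Rplus_le_compat; apply Rabs_mult_le; auto. }
  rewrite Rabs_mult, (Rabs_right 2) by lra. nra.
Qed.

Lemma horiz_gap_00 : horiz_gap 0 0 = 0.
Proof. unfold horiz_gap. rewrite Hg10, Hg20. ring. Qed.

Lemma horiz_gap_tbtb : horiz_gap tb tb = 0.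
Proof. unfold horiz_gap. rewrite Hg1tb, Hg2tb. ring. Qed.

Lemma horiz_gap_lip s l l' : Iclosed tb s -> Iclosed tb l -> Iclosed tb l' ->
  Rabs (horiz_gap s l - horiz_gap s l') <= 11 / 10 * Rabs (l - l').
Proof.
  intros Hs Hl Hl'. generalize (horiz_gap_perturb s s l' l Hs Hs Hl' Hl).
  rewrite Rminus_diag, Rabs_R0. intros H.
  replace (horiz_gap s l - horiz_gap s l')
    with ((l - l') + (horiz_gap s l - (l - s) - (horiz_gap s l' - (l' - s)))) by ring.
  eapply Rle_trans; [apply Rabs_triang | lra].
Qed.

Lemma horiz_gap_increasing s l l' : Iclosed tb s -> Iclosed tb l -> Iclosed tb l' -> l <= l' ->
  9 / 10 * (l' - l) <= horiz_gap s l' - horiz_gap s l.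
Proof.
  intros Hs Hl Hl' Hle. generalize (horiz_gap_perturb s s l l' Hs Hs Hl Hl').
  rewrite Rminus_diag, Rabs_R0, (Rabs_right (l' - l)) by lra.
  intros H. apply Rabs_le_between in H. lra.
Qed.

Definition lam (s : R) : R := epsilon (inhabits 0) (fun l => Iclosed tb l /\ horiz_gap s l = 0).

Lemma lam_spec s : Iclosed tb s -> Iclosed tb (lam s) /\ horiz_gap s (lam s) = 0.
Proof.
  intros Hs. unfold lam. apply epsilon_spec.
  destruct (lip_ivt (horiz_gap s) 0 tb (11 / 10) 0) as [x [Hx1 Hx2]]; try lra.
  - intros x y Hx Hy. apply horiz_gap_lip; auto.
  - generalize (horiz_gap_perturb 0 s 0 0) (horiz_gap_perturb tb s tb tb).
    rewrite horiz_gap_00, horiz_gap_tbtb, !Rminus_diag, Rabs_R0.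
    rewrite (Rabs_right (s - 0)), (Rabs_left1 (s - tb)) by (unfold Iclosed in Hs; lra).
    intros H0 Htb'. apply Rabs_le_between in H0; auto. apply Rabs_le_between in Htb'; auto.
    unfold Iclosed in Hs. lra.
  - exists x. auto.
Qed.

Lemma lam_closed s : Iclosed tb s -> Iclosed tb (lam s).
Proof. intros Hs. apply (lam_spec s Hs). Qed.
Local Hint Resolve lam_closed : core.

Lemma lam_unique s l : Iclosed tb s -> Iclosed tb l -> horiz_gap s l = 0 -> l = lam s.
Proof.
  intros Hs Hl HF. destruct (lam_spec s Hs) as [H1 H2].
  destruct (Rtotal_order l (lam s)) as [h | [h | h]]; auto.
  - generalize (horiz_gap_increasing s l (lam s) Hs Hl H1 (Rlt_le _ _ h)). lra.
  - generalize (horiz_gap_increasing s (lam s) l Hs H1 Hl (Rlt_le _ _ h)). lra.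
Qed.

Lemma lam_0 : lam 0 = 0.
Proof. symmetry. apply lam_unique; auto using horiz_gap_00. Qed.

Lemma lam_tb : lam tb = tb.
Proof. symmetry. apply lam_unique; auto using horiz_gap_tbtb. Qed.

Lemma lam_formula s : Iclosed tb s -> lam s = s - 2 * (g2 (lam s) - g1 s) * (p1 s + p2 (lam s)).
Proof. intros Hs. destruct (lam_spec s Hs) as [_ H]. unfold horiz_gap in H. lra. Qed.

Lemma lam_bilip s s' : Iclosed tb s -> Iclosed tb s' -> s <= s' ->
  9 / 11 * (s' - s) <= lam s' - lam s <= 11 / 9 * (s' - s).
Proof.
  intros Hs Hs' Hle. destruct (lam_spec s Hs) as [H1 H2]. destruct (lam_spec s' Hs') as [H1' H2'].
  generalize (horiz_gap_perturb s s' (lam s) (lam s') Hs Hs' H1 H1'). rewrite H2, H2'.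
  rewrite (Rabs_right (s' - s)) by lra. intros H.
  destruct (Rle_dec 0 (lam s' - lam s)).
  - rewrite (Rabs_right (lam s' - lam s)) in H by lra. apply Rabs_le_between in H. lra.
  - rewrite (Rabs_left (lam s' - lam s)) in H by lra. apply Rabs_le_between in H. lra.
Qed.

Lemma lam_lip s s' : Iclosed tb s -> Iclosed tb s' ->
  Rabs (lam s' - lam s) <= 11 / 9 * Rabs (s' - s).
Proof.
  intros Hs Hs'. destruct (Rle_dec s s') as [h | h].
  - generalize (lam_bilip s s' Hs Hs' h). split_Rabs; lra.
  - generalize (lam_bilip s' s Hs' Hs ltac:(lra)). split_Rabs; lra.
Qed.

Lemma lam_open s : Iopen tb s -> Iopen tb (lam s).
Proof.
  intros Hs. assert (Cs := Iopen_closed s Hs). unfold Iopen in Hs.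
  generalize (lam_bilip 0 s Iclosed_0 Cs ltac:(lra)) (lam_bilip s tb Cs Iclosed_tb ltac:(lra)).
  rewrite lam_0, lam_tb. unfold Iopen. lra.
Qed.

Lemma lam_onto_open a : Iopen tb a -> exists s, Iopen tb s /\ lam s = a.
Proof.
  intros Ha. destruct (lip_ivt lam 0 tb (11 / 9) a) as [s [Hs Es]]; try lra.
  - intros x y Hx Hy. apply lam_lip; auto.
  - rewrite lam_0, lam_tb. unfold Iopen in Ha. lra.
  - exists s. split; auto. unfold Iopen in *. split.
    + destruct (Req_dec s 0) as [-> | ?]; [rewrite lam_0 in Es | ]; lra.
    + destruct (Req_dec s tb) as [-> | ?]; [rewrite lam_tb in Es | ]; lra.
Qed.

Lemma lam_lt_inv s s' : Iclosed tb s -> Iclosed tb s' -> lam s < lam s' -> s < s'.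
Proof.
  intros Hs Hs' H. apply Rnot_le_lt. intros h. generalize (lam_bilip s' s Hs' Hs h). lra.
Qed.

Lemma lip_comp_lam f L : 0 <= L -> lip_with (Iclosed tb) L f -> forall s s',
  Iclosed tb s -> Iclosed tb s' -> Rabs (f (lam s') - f (lam s)) <= 11 / 9 * L * Rabs (s' - s).
Proof.
  intros HL Hf s s' Hs Hs'. eapply Rle_trans; [apply Hf; auto|].
  generalize (lam_lip s s' Hs Hs'). intros. nra.
Qed.

Lemma lam_pair_gap f1 f2 L c s : 0 <= L ->
  lip_with (Iclosed tb) L f1 -> lip_with (Iclosed tb) L f2 ->
  c = 0 \/ c = tb -> f1 c = f2 c -> Iclosed tb s ->
  Rabs (f2 (lam s) - f1 s) <= 20 / 9 * L * Rabs (s - c).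
Proof.
  intros HL H1 H2 Hc E Hs.
  assert (Cc : Iclosed tb c) by (destruct Hc as [-> | ->]; auto).
  assert (Lc : lam c = c) by (destruct Hc as [-> | ->]; auto using lam_0, lam_tb).
  replace (f2 (lam s) - f1 s) with ((f2 (lam s) - f2 (lam c)) - (f1 s - f1 c))
    by (rewrite Lc, E; ring).
  eapply Rle_trans; [apply Rabs_sub_triang|].
  generalize (lip_comp_lam f2 L HL H2 c s Cc Hs) (H1 s c Hs Cc). lra.
Qed.

Lemma lam_pair_gap_ends f1 f2 L s : 0 <= L ->
  lip_with (Iclosed tb) L f1 -> lip_with (Iclosed tb) L f2 ->
  f1 0 = f2 0 -> f1 tb = f2 tb -> Iclosed tb s ->
  Rabs (f2 (lam s) - f1 s) <= 20 / 9 * L * Rmin s (tb - s).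
Proof.
  intros HL H1 H2 E0 Etb Hs. unfold Iclosed in Hs. unfold Rmin. destruct Rle_dec.
  - eapply Rle_trans; [apply (lam_pair_gap f1 f2 L 0 s); auto|].
    rewrite Rminus_0_r, Rabs_right by lra. lra.
  - eapply Rle_trans; [apply (lam_pair_gap f1 f2 L tb s); auto|].
    rewrite Rabs_left1 by lra. lra.
Qed.

(** * Horizontal segments over D *)

Definition on_seg (s y : R) : Prop := g1 s <= y <= g2 (lam s).

Definition seg_t (s y : R) : R :=
  s - 2 * tshift (y - g1 s) (g2 (lam s) - y) (p1 s) (p2 (lam s)).

Lemma seg_ends_sign s : Iopen tb s -> g1 s < 0 < g2 (lam s).
Proof. intros Hs. split; [apply (Hsign s Hs) | apply (Hsign (lam s)), lam_open; auto]. Qed.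

Lemma seg_width s : Iclosed tb s -> g2 (lam s) - g1 s <= 20 / 9 * Lg * Rmin s (tb - s).
Proof.
  intros Hs. generalize (lam_pair_gap_ends g1 g2 Lg s HLg Hg1l Hg2l ltac:(congruence)
    ltac:(congruence) Hs). split_Rabs; lra.
Qed.

Lemma seg_jump s : Iclosed tb s -> Rabs (p2 (lam s) - p1 s) <= 20 / 9 * Lp * Rmin s (tb - s).
Proof. intros Hs. apply lam_pair_gap_ends; auto using p1_p2_0, p1_p2_tb. Qed.

Lemma seg_t_perturb s s' y y' : Iopen tb s -> Iopen tb s' -> on_seg s y -> on_seg s' y' ->
  Rabs ((seg_t s' y' - s') - (seg_t s y - s)) <= 8 * M * Rabs (y' - y) + 2 / 9 * Rabs (s' - s).
Proof.
  intros Hs Hs' Hy Hy'. unfold on_seg in *.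
  destruct (seg_ends_sign s Hs) as [hA hB]. destruct (seg_ends_sign s' Hs') as [hA' hB'].
  assert (Cs := Iopen_closed s Hs). assert (Cs' := Iopen_closed s' Hs').
  unfold seg_t.
  match goal with |- Rabs (?a - ?b) <= _ =>
    replace (a - b) with (-2 * (tshift (y' - g1 s') (g2 (lam s') - y') (p1 s') (p2 (lam s'))
                               - tshift (y - g1 s) (g2 (lam s) - y) (p1 s) (p2 (lam s))))
      by ring end.
  rewrite Rabs_mult, (Rabs_left (-2)) by lra.
  assert (hab : g2 (lam s) - g1 s <= 2 * G)
    by (generalize (Hg1b s Cs) (Hg2b (lam s) (lam_closed s Cs)); split_Rabs; lra).
  generalize (tshift_diff (y - g1 s) (g2 (lam s) - y) (y' - g1 s') (g2 (lam s') - y')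
    (p1 s) (p2 (lam s)) (p1 s') (p2 (lam s')) M G ltac:(lra) ltac:(lra) ltac:(lra) ltac:(lra)
    ltac:(lra) ltac:(lra) (Hp1b s' Cs') (Hp2b (lam s') (lam_closed s' Cs')) ltac:(lra)).
  intros h.
  set (ds := Rabs (s' - s)). set (dy := Rabs (y' - y)).
  assert (h1 : Rabs (y' - g1 s' - (y - g1 s)) + Rabs (g2 (lam s') - y' - (g2 (lam s) - y))
               <= 2 * dy + 20 / 9 * Lg * ds).
  { generalize (Hg1l s' s Cs' Cs) (lip_comp_lam g2 Lg HLg Hg2l s s' Cs Cs'). unfold ds, dy.
    split_Rabs; lra. }
  assert (h2 : Rabs (p1 s' - p1 s) + Rabs (p2 (lam s') - p2 (lam s)) <= 20 / 9 * Lp * ds).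
  { generalize (Hp1l s' s Cs' Cs) (lip_comp_lam p2 Lp HLp Hp2l s s' Cs Cs'). unfold ds. lra. }
  assert (Hds : 0 <= ds) by apply Rabs_pos.
  assert (k1 := Rmult_le_compat_l (2 * M) _ _ ltac:(lra) h1).
  assert (k2 := Rmult_le_compat_l (2 * G) _ _ ltac:(lra) h2).
  assert (k3 : 40 * (M * Lg + G * Lp) * ds <= ds) by nra.
  nra.
Qed.

Lemma seg_t_increasing s s' y : Iopen tb s -> Iopen tb s' -> on_seg s y -> on_seg s' y -> s <= s' ->
  7 / 9 * (s' - s) <= seg_t s' y - seg_t s y.
Proof.
  intros Hs Hs' Hy Hy' Hle. generalize (seg_t_perturb s s' y y Hs Hs' Hy Hy').
  rewrite Rminus_diag, Rabs_R0, (Rabs_right (s' - s)) by lra.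
  intros h. apply Rabs_le_between in h. lra.
Qed.

Lemma seg_t_lip_s s s' y : Iopen tb s -> Iopen tb s' -> on_seg s y -> on_seg s' y ->
  Rabs (seg_t s' y - seg_t s y) <= 11 / 9 * Rabs (s' - s).
Proof.
  intros Hs Hs' Hy Hy'. generalize (seg_t_perturb s s' y y Hs Hs' Hy Hy').
  rewrite Rminus_diag, Rabs_R0. split_Rabs; lra.
Qed.

Lemma seg_t_lip_y s y y' : Iopen tb s -> on_seg s y -> on_seg s y' ->
  Rabs (seg_t s y' - seg_t s y) <= 8 * M * Rabs (y' - y).
Proof.
  intros Hs Hy Hy'. generalize (seg_t_perturb s s y y' Hs Hs Hy Hy').
  rewrite Rminus_diag, Rabs_R0. split_Rabs; lra.
Qed.

Lemma seg_t_inj s s' y : Iopen tb s -> Iopen tb s' -> on_seg s y -> on_seg s' y ->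
  seg_t s y = seg_t s' y -> s = s'.
Proof.
  intros Hs Hs' Hy Hy' E. destruct (Rtotal_order s s') as [h | [h | h]]; auto.
  - generalize (seg_t_increasing s s' y Hs Hs' Hy Hy' (Rlt_le _ _ h)). lra.
  - generalize (seg_t_increasing s' s y Hs' Hs Hy' Hy (Rlt_le _ _ h)). lra.
Qed.

Lemma seg_t_at_g1 s : Iopen tb s -> seg_t s (g1 s) = s.
Proof.
  intros Hs. destruct (seg_ends_sign s Hs). unfold seg_t, tshift, harm.
  rewrite Rminus_diag. field. lra.
Qed.

Lemma seg_t_at_g2 s : Iopen tb s -> seg_t s (g2 (lam s)) = lam s.
Proof.
  intros Hs. destruct (seg_ends_sign s Hs).
  rewrite (lam_formula s (Iopen_closed s Hs)) at 2.
  unfold seg_t, tshift, harm. rewrite Rminus_diag. field. lra.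
Qed.

Lemma seg_t_near_ends s y : Iopen tb s -> on_seg s y ->
  Rabs (seg_t s y - s) <= 8 * M * (y - g1 s) /\
  Rabs (seg_t s y - lam s) <= 8 * M * (g2 (lam s) - y).
Proof.
  intros Hs Hy. unfold on_seg in Hy. destruct (seg_ends_sign s Hs).
  assert (Cs := Iopen_closed s Hs).
  destruct (tshift_bounds (y - g1 s) (g2 (lam s) - y) (p1 s) (p2 (lam s)) M ltac:(lra) ltac:(lra)
    ltac:(lra) (Hp1b s Cs) (Hp2b (lam s) (lam_closed s Cs))) as [k1 k2].
  split.
  - unfold seg_t.
    match goal with |- Rabs ?e <= _ => replace e with (-2 * tshift (y - g1 s) (g2 (lam s) - y)
      (p1 s) (p2 (lam s))) by ring end.
    rewrite Rabs_mult, (Rabs_left (-2)) by lra. lra.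
  - rewrite (lam_formula s Cs) at 1. unfold seg_t.
    match goal with |- Rabs ?e <= _ => replace e with (-2 * (tshift (y - g1 s) (g2 (lam s) - y)
      (p1 s) (p2 (lam s)) - (y - g1 s + (g2 (lam s) - y)) * (p1 s + p2 (lam s)))) by ring end.
    rewrite Rabs_mult, (Rabs_left (-2)) by lra. lra.
Qed.

Lemma seg_t_bounds s y : Iopen tb s -> on_seg s y ->
  5 / 9 * s <= seg_t s y <= 13 / 9 * s /\ 1 / 3 * (tb - s) <= tb - seg_t s y <= 15 / 9 * (tb - s).
Proof.
  intros Hs Hy. assert (Cs := Iopen_closed s Hs).
  destruct (seg_t_near_ends s y Hs Hy) as [k1 k2].
  apply Rabs_le_between in k1. apply Rabs_le_between in k2.
  generalize (lam_bilip s tb Cs Iclosed_tb ltac:(unfold Iopen in Hs; lra)). rewrite lam_tb.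
  generalize (seg_width s Cs) (Rmin_l s (tb - s)) (Rmin_r s (tb - s)).
  set (m := Rmin s (tb - s)). unfold on_seg, Iopen in *. intros.
  assert (Hm : 0 <= m) by (unfold m; apply Rmin_glb; lra).
  generalize (Rmult_le_compat_r m _ _ Hm M_Lg_small). intros HML.
  assert (w1 : 8 * M * (y - g1 s) <= 8 * M * (20 / 9 * Lg * m)) by (apply Rmult_le_compat_l; lra).
  assert (w2 : 8 * M * (g2 (lam s) - y) <= 8 * M * (20 / 9 * Lg * m))
    by (apply Rmult_le_compat_l; lra).
  lra.
Qed.

Lemma lip_with_opp P L f : lip_with P L f -> lip_with P L (fun x => - f x).
Proof.
  intros Hf s t Hs Ht. rewrite <- Rabs_Ropp. replace (- (- f s - - f t)) with (f s - f t) by ring.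
  auto.
Qed.

Lemma concave_opp P f : convex_on P f -> concave_on P (fun x => - f x).
Proof. intros Hf a b th Ha Hb Hth. generalize (Hf a b th Ha Hb Hth). lra. Qed.

Lemma superlevel_interval h y c : lip_with (Iclosed tb) Lg h -> h 0 = 0 -> h tb = 0 ->
  concave_on (Iopen tb) h -> 0 < y -> Iopen tb c -> y < h c ->
  exists a b, 0 < a < c /\ c < b < tb /\ h a = y /\ h b = y /\
    (forall t, a < t < b -> y < h t) /\ (forall t, a <= t <= b -> y <= h t).
Proof.
  intros Hl H0 H1 Hcc Hy Hc Hhc. unfold Iopen in Hc.
  destruct (lip_ivt h 0 c Lg y) as [a [Ha Ea]]; try lra.
  { intros s t Hs Ht. apply Hl; unfold Iclosed; lra. }
  destruct (lip_ivt (fun x => - h x) c tb Lg (- y)) as [b [Hb Eb]]; try lra.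
  { intros s t Hs Ht. apply (lip_with_opp _ _ _ Hl); unfold Iclosed; lra. }
  assert (a <> 0 /\ a <> c) as [] by (split; intros ->; lra).
  assert (b <> c /\ b <> tb) as [] by (split; intros ->; lra).
  assert (Oa : Iopen tb a) by (unfold Iopen; lra). assert (Ob : Iopen tb b) by (unfold Iopen; lra).
  assert (Oc : Iopen tb c) by (unfold Iopen; lra).
  assert (strict : forall t, a < t < b -> y < h t).
  { intros t Ht. destruct (Rle_dec t c).
    - set (th := (c - t) / (c - a)).
      assert (hth : 0 <= th < 1).
      { unfold th. split; [apply Rmult_le_pos; [lra | left; apply Rinv_0_lt_compat; lra]|].
        apply Rmult_lt_reg_r with (c - a); [lra|].
        unfold Rdiv. rewrite Rmult_assoc, Rinv_l by lra. lra. }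
      assert (ht : t = th * a + (1 - th) * c) by (unfold th; field; lra).
      generalize (Hcc a c th Oa Oc ltac:(lra)). rewrite <- ht. nra.
    - set (th := (b - t) / (b - c)).
      assert (hth : 0 < th <= 1).
      { unfold th. split; [apply Rmult_lt_0_compat; [lra | apply Rinv_0_lt_compat; lra]|].
        apply Rmult_le_reg_r with (b - c); [lra|].
        unfold Rdiv. rewrite Rmult_assoc, Rinv_l by lra. lra. }
      assert (ht : t = th * c + (1 - th) * b) by (unfold th; field; lra).
      generalize (Hcc c b th Oc Ob ltac:(lra)). rewrite <- ht. nra. }
  exists a, b. do 4 (split; [lra|]). split; [exact strict|].
  intros t Ht. destruct (Req_dec t a) as [-> | ?]; [lra|].
  destruct (Req_dec t b) as [-> | ?]; [lra|]. left. apply strict. lra.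
Qed.

Lemma superlevel_g1 y c : y < 0 -> Iopen tb c -> g1 c < y ->
  exists a b, 0 < a < c /\ c < b < tb /\ g1 a = y /\ g1 b = y /\
    (forall t, a < t < b -> g1 t < y) /\ (forall t, a <= t <= b -> g1 t <= y).
Proof.
  intros Hy Hc Hgc.
  destruct (superlevel_interval (fun x => - g1 x) (- y) c (lip_with_opp _ _ _ Hg1l))
    as (a & b & Ha & Hb & Ea & Eb & H1 & H2); try lra; auto using concave_opp.
  exists a, b. repeat split; try lra.
  - intros t Ht. specialize (H1 t Ht). lra.
  - intros t Ht. specialize (H2 t Ht). lra.
Qed.

Lemma seg_t_in_I s y : Iopen tb s -> on_seg s y -> Iopen tb (seg_t s y).
Proof.
  intros Hs Hy. destruct (seg_t_bounds s y Hs Hy). unfold Iopen in *. lra.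
Qed.

Lemma seg_in_D s y : Iopen tb s -> g1 s < y < g2 (lam s) -> domD tb g1 g2 y (seg_t s y).
Proof.
  intros Hs Hy. assert (Hy' : on_seg s y) by (unfold on_seg; lra).
  assert (Ht := seg_t_in_I s y Hs Hy'). destruct (Hsign _ Ht) as [ht1 ht2].
  split; auto. split.
  - destruct (Rlt_le_dec y 0) as [yn | yp]; [|lra].
    destruct (superlevel_g1 y s yn Hs ltac:(lra)) as (a & b & Ha & Hb & Ea & Eb & Hin & _).
    assert (Oa : Iopen tb a) by (unfold Iopen in *; lra).
    assert (Ob : Iopen tb b) by (unfold Iopen in *; lra).
    assert (ya : on_seg a y) by (unfold on_seg; generalize (seg_ends_sign a Oa); lra).
    assert (yb : on_seg b y) by (unfold on_seg; generalize (seg_ends_sign b Ob); lra).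
    assert (Ta : seg_t a y = a) by (rewrite <- Ea; apply seg_t_at_g1; auto).
    assert (Tb : seg_t b y = b) by (rewrite <- Eb; apply seg_t_at_g1; auto).
    generalize (seg_t_increasing a s y Oa Hs ya Hy' ltac:(lra))
      (seg_t_increasing s b y Hs Ob Hy' yb ltac:(lra)).
    intros. apply Hin. lra.
  - destruct (Rle_lt_dec y 0) as [yn | yp]; [lra|].
    destruct (superlevel_interval g2 y (lam s) Hg2l Hg20 Hg2tb Hconc yp (lam_open s Hs)
      ltac:(lra)) as (a & b & Ha & Hb & Ea & Eb & Hin & _).
    destruct (lam_onto_open a ltac:(unfold Iopen in *; lra)) as [s0 [Os0 Es0]].
    destruct (lam_onto_open b ltac:(unfold Iopen in *; lra)) as [s1 [Os1 Es1]].
    assert (s0 < s) by (apply lam_lt_inv; auto; lra).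
    assert (s < s1) by (apply lam_lt_inv; auto; lra).
    assert (y0 : on_seg s0 y)
      by (unfold on_seg; generalize (seg_ends_sign s0 Os0); rewrite Es0; lra).
    assert (y1 : on_seg s1 y)
      by (unfold on_seg; generalize (seg_ends_sign s1 Os1); rewrite Es1; lra).
    assert (T0 : seg_t s0 y = a) by (rewrite <- Ea, <- Es0; apply seg_t_at_g2; auto).
    assert (T1 : seg_t s1 y = b) by (rewrite <- Eb, <- Es1; apply seg_t_at_g2; auto).
    generalize (seg_t_increasing s0 s y Os0 Hs y0 Hy' ltac:(lra))
      (seg_t_increasing s s1 y Hs Os1 Hy' y1 ltac:(lra)).
    intros. apply Hin. lra.
Qed.

Lemma seg_bracket y t : domD tb g1 g2 y t ->
  exists s0 s1, s0 <= s1 /\ (forall s, s0 <= s <= s1 -> Iopen tb s /\ on_seg s y) /\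
    seg_t s0 y <= t <= seg_t s1 y.
Proof.
  intros [Ht [Hy1 Hy2]]. destruct (Rtotal_order y 0) as [yn | [-> | yp]].
  - destruct (superlevel_g1 y t yn Ht Hy1) as (a & b & Ha & Hb & Ea & Eb & _ & Hle).
    assert (Oa : Iopen tb a) by (unfold Iopen in *; lra).
    assert (Ob : Iopen tb b) by (unfold Iopen in *; lra).
    assert (Ta : seg_t a y = a) by (rewrite <- Ea; apply seg_t_at_g1; auto).
    assert (Tb : seg_t b y = b) by (rewrite <- Eb; apply seg_t_at_g1; auto).
    exists a, b. split; [lra | split; [|lra]].
    intros s Hs. assert (Os : Iopen tb s) by (unfold Iopen in *; lra).
    split; auto. unfold on_seg. generalize (seg_ends_sign s Os) (Hle s Hs). lra.
  - assert (on0 : forall s, Iopen tb s -> on_seg s 0)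
      by (intros s Hs; unfold on_seg; generalize (seg_ends_sign s Hs); lra).
    unfold Iopen in Ht.
    assert (O0 : Iopen tb (t / 2)) by (unfold Iopen; lra).
    assert (O1 : Iopen tb ((t + tb) / 2)) by (unfold Iopen; lra).
    destruct (seg_t_bounds _ 0 O0 (on0 _ O0)) as [[_ k0] _].
    destruct (seg_t_bounds _ 0 O1 (on0 _ O1)) as [_ [_ k1]].
    exists (t / 2), ((t + tb) / 2). split; [lra | split; [|lra]].
    intros s Hs. assert (Os : Iopen tb s) by (unfold Iopen; lra). auto.
  - destruct (superlevel_interval g2 y t Hg2l Hg20 Hg2tb Hconc yp Ht Hy2)
      as (a & b & Ha & Hb & Ea & Eb & _ & Hle).
    destruct (lam_onto_open a ltac:(unfold Iopen in *; lra)) as [s0 [Os0 Es0]].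
    destruct (lam_onto_open b ltac:(unfold Iopen in *; lra)) as [s1 [Os1 Es1]].
    assert (s0 < s1) by (apply lam_lt_inv; auto; lra).
    assert (T0 : seg_t s0 y = a) by (rewrite <- Ea, <- Es0; apply seg_t_at_g2; auto).
    assert (T1 : seg_t s1 y = b) by (rewrite <- Eb, <- Es1; apply seg_t_at_g2; auto).
    exists s0, s1. split; [lra | split; [|lra]].
    intros s Hs. assert (Os : Iopen tb s) by (unfold Iopen in *; lra). split; auto.
    generalize (lam_bilip s0 s ltac:(auto) ltac:(auto) ltac:(lra))
      (lam_bilip s s1 ltac:(auto) ltac:(auto) ltac:(lra)) (seg_ends_sign s Os).
    intros. unfold on_seg. split; [lra|]. apply Hle. lra.
Qed.

Lemma seg_cover y t : domD tb g1 g2 y t ->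
  exists s, Iopen tb s /\ g1 s < y < g2 (lam s) /\ seg_t s y = t.
Proof.
  intros HD. destruct (seg_bracket y t HD) as (s0 & s1 & Hle & Hall & Ht).
  destruct (lip_ivt (fun s => seg_t s y) s0 s1 (11 / 9) t Hle ltac:(lra)) as [s [Hs Es]]; auto.
  { intros x x' Hx Hx'. destruct (Hall x Hx), (Hall x' Hx'). apply seg_t_lip_s; auto. }
  destruct (Hall s Hs) as [Os [Hy1 Hy2]]. destruct HD as [_ [Hg1t Hg2t]].
  exists s. split; auto. split; [split|]; auto.
  - destruct Hy1 as [? | Heq]; auto. exfalso.
    rewrite <- Heq, seg_t_at_g1 in Es by auto. subst t. lra.
  - destruct Hy2 as [? | Heq]; auto. exfalso.
    rewrite Heq, seg_t_at_g2 in Es by auto. subst t. lra.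
Qed.

Definition seg_u (s y : R) : R :=
  p1 s + (y - g1 s) * (p2 (lam s) - p1 s) / (g2 (lam s) - g1 s).

Definition mid_depth : R := - g1 (tb / 2).

Lemma mid_depth_pos : 0 < mid_depth.
Proof. unfold mid_depth. generalize (Hsign (tb / 2) ltac:(unfold Iopen; lra)). lra. Qed.

Lemma convex_chord_below a b th : Iopen tb a -> Iopen tb b -> 0 <= th <= 1 ->
  th * (- g1 a) <= - g1 (th * a + (1 - th) * b).
Proof.
  intros Ha Hb Hth. generalize (Hconv a b th Ha Hb Hth) (Hsign b Hb). nra.
Qed.

Lemma tent_bound s : Iopen tb s -> mid_depth * Rmin s (tb - s) <= tb * (- g1 s).
Proof.
  intros Hs. generalize (Hsign s Hs). unfold Iopen, mid_depth, Rmin in *. intros [Hg _].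
  destruct Rle_dec.
  - generalize (convex_chord_below (tb / 2) (s / 2) (s / (tb - s)) ltac:(unfold Iopen; lra)
      ltac:(unfold Iopen; lra) ltac:(apply Rdiv_between; lra)).
    replace (s / (tb - s) * (tb / 2) + (1 - s / (tb - s)) * (s / 2)) with s by (field; lra).
    intros H. apply Rmult_le_compat_r with (r := tb - s) in H; [|lra].
    replace (s / (tb - s) * - g1 (tb / 2) * (tb - s)) with (- g1 (tb / 2) * s) in H
      by (field; lra).
    nra.
  - generalize (convex_chord_below (tb / 2) ((s + tb) / 2) ((tb - s) / s) ltac:(unfold Iopen; lra)
      ltac:(unfold Iopen; lra) ltac:(apply Rdiv_between; lra)).
    replace ((tb - s) / s * (tb / 2) + (1 - (tb - s) / s) * ((s + tb) / 2)) with s by (field; lra).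
    intros H. apply Rmult_le_compat_r with (r := s) in H; [|lra].
    replace ((tb - s) / s * - g1 (tb / 2) * s) with (- g1 (tb / 2) * (tb - s)) in H
      by (field; lra).
    nra.
Qed.

Definition slope_bound : R := 3 * Lp * tb / mid_depth.

Lemma slope_bound_nonneg : 0 <= slope_bound.
Proof.
  unfold slope_bound. generalize mid_depth_pos. intros.
  apply Rmult_le_pos; [nra | left; apply Rinv_0_lt_compat; auto].
Qed.

(* The jump of p and, by convexity of g1, the width of the segment both vanish
   linearly at the ends of I, so u has bounded slope along every segment. *)
Lemma seg_slope s : Iopen tb s -> Rabs (p2 (lam s) - p1 s) <= slope_bound * (g2 (lam s) - g1 s).
Proof.
  intros Hs. assert (Hj := seg_jump s (Iopen_closed s Hs)). assert (Ht := tent_bound s Hs).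
  destruct (seg_ends_sign s Hs) as [hA hB]. assert (mp := mid_depth_pos).
  assert (Hm : 0 <= Rmin s (tb - s)) by (unfold Iopen in Hs; apply Rmin_glb; lra).
  unfold slope_bound. apply Rmult_le_reg_l with mid_depth; auto.
  replace (mid_depth * (3 * Lp * tb / mid_depth * (g2 (lam s) - g1 s)))
    with (3 * Lp * tb * (g2 (lam s) - g1 s)) by (field; lra).
  assert (k1 := Rmult_le_compat_l mid_depth _ _ ltac:(lra) Hj).
  assert (k2 := Rmult_le_compat_l Lp _ _ HLp Ht).
  assert (k3 : Lp * tb * - g1 s <= Lp * tb * (g2 (lam s) - g1 s))
    by (apply Rmult_le_compat_l; [apply Rmult_le_pos|]; lra).
  assert (0 <= Lp * tb * (g2 (lam s) - g1 s)) by (apply Rmult_le_pos; [apply Rmult_le_pos|]; lra).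
  lra.
Qed.

Lemma seg_u_alt s y : Iopen tb s ->
  seg_u s y = p1 s - (y - g1 s) * (p1 s - p2 (lam s)) / (g2 (lam s) - g1 s).
Proof. intros Hs. destruct (seg_ends_sign s Hs). unfold seg_u. field. lra. Qed.

Lemma seg_u_lip_y s y y' : Iopen tb s ->
  Rabs (seg_u s y' - seg_u s y) <= slope_bound * Rabs (y' - y).
Proof.
  intros Hs. destruct (seg_ends_sign s Hs).
  replace (seg_u s y' - seg_u s y)
    with ((y' - y) * ((p2 (lam s) - p1 s) / (g2 (lam s) - g1 s))) by (unfold seg_u; field; lra).
  rewrite Rabs_mult, Rmult_comm. apply Rmult_le_compat_r; [apply Rabs_pos|].
  apply Rabs_div_le; [lra | apply seg_slope; auto].
Qed.

Definition drift_bound : R := 4 * Lp + 3 * slope_bound * Lg.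

Lemma seg_u_lip_s s s' y : Iopen tb s -> Iopen tb s' -> on_seg s y -> on_seg s' y ->
  Rabs (seg_u s' y - seg_u s y) <= drift_bound * Rabs (s' - s).
Proof.
  intros Hs Hs' Hy Hy'. unfold on_seg in *. rewrite (seg_u_alt s y Hs), (seg_u_alt s' y Hs').
  destruct (seg_ends_sign s Hs). destruct (seg_ends_sign s' Hs').
  assert (Cs := Iopen_closed s Hs). assert (Cs' := Iopen_closed s' Hs').
  eapply Rle_trans; [apply interp_diff with (K := slope_bound); try lra|].
  { rewrite Rabs_minus_sym. apply seg_slope; auto. }
  replace (y - g1 s' - (y - g1 s)) with (- (g1 s' - g1 s)) by ring. rewrite Rabs_Ropp.
  replace (g2 (lam s') - g1 s' - (y - g1 s') - (g2 (lam s) - g1 s - (y - g1 s)))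
    with (g2 (lam s') - g2 (lam s)) by ring.
  replace (p1 s' - p2 (lam s') - (p1 s - p2 (lam s)))
    with ((p1 s' - p1 s) - (p2 (lam s') - p2 (lam s))) by ring.
  generalize (Hp1l s' s Cs' Cs) (lip_comp_lam p2 Lp HLp Hp2l s s' Cs Cs')
    (Hg1l s' s Cs' Cs) (lip_comp_lam g2 Lg HLg Hg2l s s' Cs Cs')
    (Rabs_sub_triang (p1 s' - p1 s) (p2 (lam s') - p2 (lam s))) slope_bound_nonneg
    (Rabs_pos (s' - s)).
  intros. unfold drift_bound.
  assert (slope_bound * (Rabs (g1 s' - g1 s) + Rabs (g2 (lam s') - g2 (lam s)))
          <= slope_bound * (20 / 9 * Lg * Rabs (s' - s))) by (apply Rmult_le_compat_l; lra).
  assert (0 <= slope_bound * Lg * Rabs (s' - s))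
    by (apply Rmult_le_pos; [apply Rmult_le_pos|]; lra).
  assert (0 <= Lp * Rabs (s' - s)) by (apply Rmult_le_pos; lra).
  nra.
Qed.

Lemma common_height s s' y y' : Iopen tb s -> Iopen tb s' -> on_seg s y -> on_seg s' y' ->
  exists w, on_seg s w /\ on_seg s' w /\ Rabs (y - w) + Rabs (w - y') = Rabs (y - y').
Proof.
  intros Hs Hs' Hy Hy'. unfold on_seg in *.
  destruct (seg_ends_sign s Hs). destruct (seg_ends_sign s' Hs').
  destruct (Rle_dec (g1 s') y); [destruct (Rle_dec y (g2 (lam s')))|].
  - exists y. rewrite Rminus_diag, Rabs_R0. split; [lra | split; [lra | ring]].
  - destruct (Rle_dec (g1 s) y'); [destruct (Rle_dec y' (g2 (lam s)))|].
    + exists y'. rewrite (Rminus_diag y'), Rabs_R0. split; [lra | split; [lra | ring]].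
    + lra.
    + exists 0. split; [lra | split; [lra | split_Rabs; lra]].
  - destruct (Rle_dec (g1 s) y'); [destruct (Rle_dec y' (g2 (lam s)))|].
    + exists y'. rewrite (Rminus_diag y'), Rabs_R0. split; [lra | split; [lra | ring]].
    + exists 0. split; [lra | split; [lra | split_Rabs; lra]].
    + lra.
Qed.

Definition lip_const : R := slope_bound + 16 * drift_bound * M + 2 * drift_bound.

Lemma drift_bound_nonneg : 0 <= drift_bound.
Proof. unfold drift_bound. generalize slope_bound_nonneg. intros. nra. Qed.

Lemma lip_const_nonneg : 0 <= lip_const.
Proof.
  unfold lip_const. generalize slope_bound_nonneg drift_bound_nonneg. intros. nra.
Qed.

(* Move vertically to a common height w, then across segments at height w, where
   seg_t_increasing controls |s' - s| by the change of t. *)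
Lemma seg_u_lip s s' y y' : Iopen tb s -> Iopen tb s' -> on_seg s y -> on_seg s' y' ->
  Rabs (seg_u s' y' - seg_u s y)
  <= lip_const * Rabs (y' - y) + lip_const * Rabs (seg_t s' y' - seg_t s y).
Proof.
  intros Hs Hs' Hy Hy'. destruct (common_height s s' y y' Hs Hs' Hy Hy') as [w [hw [hw' hd]]].
  assert (es : 7 / 9 * Rabs (s' - s) <= Rabs (seg_t s' w - seg_t s w)).
  { destruct (Rle_dec s s').
    - generalize (seg_t_increasing s s' w Hs Hs' hw hw' r). split_Rabs; lra.
    - generalize (seg_t_increasing s' s w Hs' Hs hw' hw ltac:(lra)). split_Rabs; lra. }
  generalize (seg_t_lip_y s' y' w Hs' Hy' hw') (seg_t_lip_y s w y Hs hw Hy)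
    (seg_u_lip_y s' w y' Hs') (seg_u_lip_s s s' w Hs Hs' hw hw') (seg_u_lip_y s y w Hs)
    (Rabs_triang3 (seg_t s' w) (seg_t s' y') (seg_t s y) (seg_t s w))
    (Rabs_triang3 (seg_u s' y') (seg_u s' w) (seg_u s w) (seg_u s y)).
  rewrite (Rabs_minus_sym w y), (Rabs_minus_sym y' w), (Rabs_minus_sym y' y).
  intros t1 t2 u1 u2 u3 tt ut.
  generalize slope_bound_nonneg drift_bound_nonneg (Rabs_pos (y - w)) (Rabs_pos (w - y'))
    (Rabs_pos (seg_t s' y' - seg_t s y)) (Rabs_pos (s' - s)). intros.
  assert (drift_bound * Rabs (s' - s)
          <= drift_bound * (9 / 7 * (8 * M * Rabs (y - y') + Rabs (seg_t s' y' - seg_t s y)))).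
  { apply Rmult_le_compat_l; auto. rewrite <- hd. lra. }
  assert (slope_bound * Rabs (y - w) + slope_bound * Rabs (w - y') = slope_bound * Rabs (y - y'))
    by (rewrite <- hd; ring).
  assert (0 <= drift_bound * M * Rabs (y - y'))
    by (apply Rmult_le_pos; [apply Rmult_le_pos|]; auto; apply Rabs_pos).
  assert (0 <= drift_bound * Rabs (seg_t s' y' - seg_t s y)) by (apply Rmult_le_pos; auto).
  unfold lip_const. nra.
Qed.

Lemma seg_u_near_0 s y : Iopen tb s -> on_seg s y -> Rabs (seg_u s y - p1 0) <= 6 * Lp * seg_t s y.
Proof.
  intros Hs Hy. assert (Cs := Iopen_closed s Hs). destruct (seg_ends_sign s Hs).
  destruct (seg_t_bounds s y Hs Hy) as [[k _] _].
  assert (Hj := seg_jump s Cs). assert (Hm := Rmin_l s (tb - s)).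
  assert (Rabs (p1 s - p1 0) <= Lp * s)
    by (generalize (Hp1l s 0 Cs Iclosed_0); rewrite Rminus_0_r, (Rabs_right s);
        unfold Iopen in Hs; lra).
  assert (Rabs ((y - g1 s) * (p1 s - p2 (lam s)) / (g2 (lam s) - g1 s))
          <= Rabs (p2 (lam s) - p1 s)).
  { unfold on_seg in Hy. apply Rabs_div_le; [lra|].
    rewrite Rabs_mult, (Rabs_right (y - g1 s)), Rabs_minus_sym by lra.
    generalize (Rabs_pos (p2 (lam s) - p1 s)). nra. }
  rewrite (seg_u_alt s y Hs).
  replace (p1 s - (y - g1 s) * (p1 s - p2 (lam s)) / (g2 (lam s) - g1 s) - p1 0)
    with ((p1 s - p1 0) - (y - g1 s) * (p1 s - p2 (lam s)) / (g2 (lam s) - g1 s)) by ring.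
  eapply Rle_trans; [apply Rabs_sub_triang|]. unfold Iopen in Hs. nra.
Qed.

Lemma seg_u_near_tb s y : Iopen tb s -> on_seg s y ->
  Rabs (seg_u s y - p1 tb) <= 12 * Lp * (tb - seg_t s y).
Proof.
  intros Hs Hy. assert (Cs := Iopen_closed s Hs). destruct (seg_ends_sign s Hs).
  destruct (seg_t_bounds s y Hs Hy) as [_ [k _]].
  assert (Hj := seg_jump s Cs). assert (Hm := Rmin_r s (tb - s)).
  generalize (lam_bilip s tb Cs Iclosed_tb ltac:(unfold Iopen in Hs; lra)).
  rewrite lam_tb. intros hl.
  assert (Rabs (p2 (lam s) - p2 tb) <= 11 / 9 * Lp * (tb - s)).
  { generalize (Hp2l (lam s) tb (lam_closed s Cs) Iclosed_tb).
    rewrite (Rabs_left1 (lam s - tb)) by lra. intros. nra. }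
  assert (Rabs ((g2 (lam s) - y) * (p1 s - p2 (lam s)) / (g2 (lam s) - g1 s))
          <= Rabs (p2 (lam s) - p1 s)).
  { unfold on_seg in Hy. apply Rabs_div_le; [lra|].
    rewrite Rabs_mult, (Rabs_right (g2 (lam s) - y)), Rabs_minus_sym by lra.
    generalize (Rabs_pos (p2 (lam s) - p1 s)). nra. }
  replace (seg_u s y - p1 tb)
    with ((p2 (lam s) - p2 tb) + (g2 (lam s) - y) * (p1 s - p2 (lam s)) / (g2 (lam s) - g1 s))
    by (rewrite p1_p2_tb; unfold seg_u; field; lra).
  eapply Rle_trans; [apply Rabs_triang|]. unfold Iopen in Hs. nra.
Qed.

(** * The solution *)

Definition seg_param (s y t : R) : Prop := Iopen tb s /\ on_seg s y /\ seg_t s y = t.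

(* By seg_t_inj the segment through (y, t) is unique when it exists.  The only points
   of the closure of D on no segment are the corners (0, 0) and (0, tb). *)
Definition u (y t : R) : R :=
  match excluded_middle_informative (exists s, seg_param s y t) with
  | left _ => seg_u (epsilon (inhabits 0) (fun s => seg_param s y t)) y
  | right _ => phi y t
  end.

Lemma u_param s y t : seg_param s y t -> u y t = seg_u s y.
Proof.
  intros Hw. unfold u. destruct excluded_middle_informative as [h | h].
  - assert (Hw' := epsilon_spec (inhabits 0) (fun s => seg_param s y t) h).
    destruct Hw as [o1 [a1 e1]]. destruct Hw' as [o2 [a2 e2]].
    f_equal. apply (seg_t_inj _ _ y o2 o1 a2 a1). congruence.
  - exfalso. apply h. exists s. auto.
Qed.

Lemma u_no_param y t : ~ (exists s, seg_param s y t) -> u y t = phi y t.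
Proof. intros h. unfold u. destruct excluded_middle_informative; tauto. Qed.

Lemma u_corner_0 : u 0 0 = p1 0.
Proof.
  rewrite u_no_param, <- Hphi1, Hg10; auto.
  intros [s [Hs [Hy Ht]]]. generalize (seg_t_in_I s 0 Hs Hy). unfold Iopen. lra.
Qed.

Lemma u_corner_tb : u 0 tb = p1 tb.
Proof.
  rewrite u_no_param, <- Hphi1, Hg1tb; auto.
  intros [s [Hs [Hy Ht]]]. generalize (seg_t_in_I s 0 Hs Hy). unfold Iopen. lra.
Qed.

Lemma param_g1 s : Iopen tb s -> seg_param s (g1 s) s.
Proof.
  intros Hs. split; auto. split; [|apply seg_t_at_g1; auto].
  unfold on_seg. generalize (seg_ends_sign s Hs). lra.
Qed.

Lemma param_g2 s : Iopen tb s -> seg_param s (g2 (lam s)) (lam s).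
Proof.
  intros Hs. split; auto. split; [|apply seg_t_at_g2; auto].
  unfold on_seg. generalize (seg_ends_sign s Hs). lra.
Qed.

Lemma closure_points y t : closureW (domD tb g1 g2) y t ->
  (y = 0 /\ t = 0) \/ (y = 0 /\ t = tb) \/ exists s, seg_param s y t.
Proof.
  intros Hc. destruct (closure_domD_inv y t Hc) as [Ht [Hy1 Hy2]].
  destruct (Req_dec t 0) as [-> | E0]; [rewrite Hg10, Hg20 in *; left; split; lra|].
  destruct (Req_dec t tb) as [-> | Etb]; [rewrite Hg1tb, Hg2tb in *; right; left; split; lra|].
  right; right. assert (Ot : Iopen tb t) by (unfold Iopen, Iclosed in *; lra).
  destruct (Req_dec y (g1 t)) as [-> | e1]; [exists t; apply param_g1; auto|].
  destruct (Req_dec y (g2 t)) as [-> | e2].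
  - destruct (lam_onto_open t Ot) as [s [Os <-]]. exists s. apply param_g2; auto.
  - destruct (seg_cover y t ltac:(split; auto; lra)) as [s [Os [Hy Es]]].
    exists s. split; auto. split; auto. unfold on_seg. lra.
Qed.

Lemma u_boundary y t : bdryW (domD tb g1 g2) y t -> u y t = phi y t.
Proof.
  intros Hb. destruct (bdry_domD_cases y t Hb) as [[-> ->] | [[-> ->] | [Ot [-> | ->]]]].
  - rewrite u_corner_0, <- Hphi1, Hg10. reflexivity.
  - rewrite u_corner_tb, <- Hphi1, Hg1tb. reflexivity.
  - rewrite (u_param t _ t (param_g1 t Ot)), Hphi1. destruct (seg_ends_sign t Ot).
    unfold seg_u. rewrite Rminus_diag. field. lra.
  - destruct (lam_onto_open t Ot) as [s [Os <-]].
    rewrite (u_param s _ _ (param_g2 s Os)), Hphi2. destruct (seg_ends_sign s Os).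
    unfold seg_u. field. lra.
Qed.

Lemma u_near_corners y t : closureW (domD tb g1 g2) y t ->
  Rabs (u y t - p1 0) <= 12 * Lp * t /\ Rabs (u y t - p1 tb) <= 12 * Lp * (tb - t).
Proof.
  intros Hc. assert (Hends : Rabs (p1 0 - p1 tb) <= 12 * Lp * tb).
  { generalize (Hp1l 0 tb Iclosed_0 Iclosed_tb).
    rewrite Rminus_0_l, Rabs_Ropp, (Rabs_right tb) by lra.
    nra. }
  destruct (closure_points y t Hc) as [[-> ->] | [[-> ->] | [s Hw]]].
  - rewrite u_corner_0, Rminus_diag, Rabs_R0. split; lra.
  - rewrite u_corner_tb, Rminus_diag, Rabs_R0, Rabs_minus_sym. split; lra.
  - rewrite (u_param s y t Hw). destruct Hw as [Os [Hy <-]].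
    generalize (seg_u_near_0 s y Os Hy) (seg_u_near_tb s y Os Hy) (seg_t_in_I s y Os Hy).
    unfold Iopen. intros. split; nra.
Qed.

Lemma u_lip_corner y t y' t' : closureW (domD tb g1 g2) y t -> y' = 0 -> t' = 0 \/ t' = tb ->
  Rabs (u y t - u y' t') <= 12 * Lp * Rabs (t - t').
Proof.
  intros Hc -> Ht'. destruct (closure_domD_inv y t Hc) as [Ht _]. unfold Iclosed in Ht.
  destruct (u_near_corners y t Hc) as [k0 ktb].
  destruct Ht' as [-> | ->].
  - rewrite u_corner_0, Rminus_0_r, (Rabs_right t) by lra. lra.
  - rewrite u_corner_tb, (Rabs_left1 (t - tb)) by lra. lra.
Qed.

Lemma u_lipschitz : exists L, forall y t y' t',
  closureW (domD tb g1 g2) y t -> closureW (domD tb g1 g2) y' t' ->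
  Rabs (u y t - u y' t') <= L * distW y t y' t'.
Proof.
  exists (2 * lip_const + 12 * Lp). intros y t y' t' Hc Hc'.
  destruct (distW_ge y t y' t') as [dy dt]. set (d := distW y t y' t') in *.
  assert (Hd : 0 <= d) by (generalize (Rabs_pos (y - y')); lra).
  assert (Hcorner : 12 * Lp * Rabs (t - t') <= (2 * lip_const + 12 * Lp) * d).
  { generalize lip_const_nonneg (Rmult_le_compat_l (12 * Lp) _ _ ltac:(lra) dt). nra. }
  destruct (closure_points y t Hc) as [[-> ->] | [[-> ->] | [s Hw]]];
    [ rewrite Rabs_minus_sym; rewrite Rabs_minus_sym in Hcorner;
      eapply Rle_trans; [apply u_lip_corner; auto | exact Hcorner] .. |].
  destruct (closure_points y' t' Hc') as [[-> ->] | [[-> ->] | [s' Hw']]];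
    [eapply Rle_trans; [apply u_lip_corner; auto | exact Hcorner] .. |].
  rewrite (u_param s y t Hw), (u_param s' y' t' Hw'), Rabs_minus_sym.
  destruct Hw as [Os [Hy Ht]]. destruct Hw' as [Os' [Hy' Ht']].
  eapply Rle_trans; [apply seg_u_lip; auto|].
  rewrite Ht, Ht', (Rabs_minus_sym y'), (Rabs_minus_sym t').
  generalize lip_const_nonneg (Rmult_le_compat_l lip_const _ _ lip_const_nonneg dy)
    (Rmult_le_compat_l lip_const _ _ lip_const_nonneg dt). nra.
Qed.

Lemma in_horizontal_gap s l :
  in_horizontal (p_i phi g1 s) (vsub (p_i phi g2 l) (p_i phi g1 s)) <-> horiz_gap s l = 0.
Proof.
  unfold in_horizontal, p_i, phi_i, vsub, vadd, vscale, Xf, Yf, horiz_gap.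
  rewrite !Hphi1, !Hphi2. split.
  - intros [a [b E]]. injection E as e1 e2 e3.
    replace a with (p2 l - p1 s) in e3 by lra. replace b with (g2 l - g1 s) in e3 by lra. lra.
  - intros H. exists (p2 l - p1 s), (g2 l - g1 s). f_equal; [f_equal|]; lra.
Qed.

Lemma seg_point s h y : Iopen tb s -> y = (1 - h) * g1 s + h * g2 (lam s) ->
  vadd (vscale (1 - h) (p_i phi g1 s)) (vscale h (p_i phi g2 (lam s)))
  = (seg_u s y, y, seg_t s y + 2 * y * seg_u s y).
Proof.
  intros Hs Hy. destruct (seg_ends_sign s Hs).
  destruct (segment_coords (g1 s) (g2 (lam s)) (p1 s) (p2 (lam s)) s (lam s) h y ltac:(lra)
    (lam_formula s (Iopen_closed s Hs)) Hy) as [q1 q2].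
  unfold p_i, phi_i, vadd, vscale, seg_u, seg_t. rewrite !Hphi1, !Hphi2, q2, q1, Hy.
  reflexivity.
Qed.

Lemma R_phi_sub_S_u p : R_phi tb g1 g2 phi p -> S_u tb g1 g2 u p.
Proof.
  intros (h & s & l & Hh & Hs & Hl & Hhor & ->).
  apply in_horizontal_gap, lam_unique in Hhor; auto. subst l.
  destruct (seg_ends_sign s Hs).
  set (y := (1 - h) * g1 s + h * g2 (lam s)).
  assert (Hy : g1 s < y < g2 (lam s)) by (unfold y; nra).
  exists y, (seg_t s y). split; [apply seg_in_D; auto|].
  rewrite (seg_point s h y Hs eq_refl), (u_param s y (seg_t s y)); [reflexivity|].
  split; auto. split; [unfold on_seg; lra | reflexivity].
Qed.

Lemma S_u_sub_R_phi p : S_u tb g1 g2 u p -> R_phi tb g1 g2 phi p.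
Proof.
  intros (y & t & HD & ->). destruct (seg_cover y t HD) as (s & Hs & Hy & <-).
  destruct (seg_ends_sign s Hs).
  set (h := (y - g1 s) / (g2 (lam s) - g1 s)).
  assert (hy : y = (1 - h) * g1 s + h * g2 (lam s)) by (unfold h; field; lra).
  assert (h1 : 1 - h = (g2 (lam s) - y) / (g2 (lam s) - g1 s)) by (unfold h; field; lra).
  assert (h0 : 0 < h) by (apply Rdiv_lt_0_compat; lra).
  assert (0 < 1 - h) by (rewrite h1; apply Rdiv_lt_0_compat; lra).
  exists h, s, (lam s). split; [lra|]. split; [auto|]. split; [auto|]. split.
  - apply in_horizontal_gap, lam_spec; auto.
  - rewrite (seg_point s h y Hs hy), (u_param s y (seg_t s y)); [reflexivity|].
    split; auto. split; [unfold on_seg; lra | reflexivity].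
Qed.

Lemma intrinsic_graph_solution : exists u : R -> R -> R,
  (forall p : pt3, R_phi tb g1 g2 phi p <-> S_u tb g1 g2 u p) /\
  (exists L : R, forall y t y' t',
      closureW (domD tb g1 g2) y t -> closureW (domD tb g1 g2) y' t' ->
      Rabs (u y t - u y' t') <= L * distW y t y' t') /\
  (forall y t, bdryW (domD tb g1 g2) y t -> u y t = phi y t).
Proof.
  exists u. split; [|split].
  - intros p. split; [apply R_phi_sub_S_u | apply S_u_sub_R_phi].
  - exact u_lipschitz.
  - exact u_boundary.
Qed.

End Construction.
End Domain.

Theorem theorem3p1 (tb : R) (g1 g2 : R -> R) (phi : R -> R -> R) :
  0 < tb ->
  lip_on (Iopen tb) g1 -> lip_on (Iopen tb) g2 ->
  cont_on (Iclosed tb) g1 -> cont_on (Iclosed tb) g2 ->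
  (forall t, Iopen tb t -> g1 t < 0 < g2 t) ->
  g1 0 = 0 -> g1 tb = 0 -> g2 0 = 0 -> g2 tb = 0 ->
  convex_on (Iopen tb) g1 -> concave_on (Iopen tb) g2 ->
  (* phi : boundary of D -> R is continuous *)
  (forall y t, bdryW (domD tb g1 g2) y t ->
     forall eps, 0 < eps -> exists delta, 0 < delta /\
       forall y' t', bdryW (domD tb g1 g2) y' t' -> distW y t y' t' < delta ->
         Rabs (phi y' t' - phi y t) < eps) ->
  lip_on (Iopen tb) (phi_i phi g1) -> lip_on (Iopen tb) (phi_i phi g2) ->
  zeta tb g1 g2 phi < (sqrt 129 - 11) / 4 ->
  exists u : R -> R -> R,
    (forall p : pt3, R_phi tb g1 g2 phi p <-> S_u tb g1 g2 u p) /\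
    (exists L : R, forall y t y' t',
        closureW (domD tb g1 g2) y t -> closureW (domD tb g1 g2) y' t' ->
        Rabs (u y t - u y' t') <= L * distW y t y' t') /\
    (forall y t, bdryW (domD tb g1 g2) y t -> u y t = phi y t).
Proof.
  intros Htb Hl1 Hl2 Hc1 Hc2 Hsign Hg10 Hg1tb Hg20 Hg2tb Hconv Hconc Hphi Hpl1 Hpl2 Hzeta.
  assert (Hcp1 : cont_on (Iclosed tb) (phi_i phi g1))
    by (apply (cont_on_phi_i tb g1 g2); auto; intros; eapply bdry_graph_g1; eauto).
  assert (Hcp2 : cont_on (Iclosed tb) (phi_i phi g2))
    by (apply (cont_on_phi_i tb g1 g2); auto; intros; eapply bdry_graph_g2; eauto).
  destruct (closed_constants tb g1 g2 Htb Hl1 Hl2 Hc1 Hc2)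
    as (HG & HLg & Hg1b & Hg2b & Hg1l & Hg2l).
  destruct (closed_constants tb _ _ Htb Hpl1 Hpl2 Hcp1 Hcp2)
    as (HM & HLp & Hp1b & Hp2b & Hp1l & Hp2l).
  unfold zeta in Hzeta.
  apply intrinsic_graph_solution with (p1 := phi_i phi g1) (p2 := phi_i phi g2)
    (G := Rmax (supI tb g1) (supI tb g2)) (Lg := Rmax (lipI tb g1) (lipI tb g2))
    (M := Rmax (supI tb (phi_i phi g1)) (supI tb (phi_i phi g2)))
    (Lp := Rmax (lipI tb (phi_i phi g1)) (lipI tb (phi_i phi g2))); auto.
  apply zeta_small; auto.
Qed.
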